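(* Consider the 10-dimensional system, for $i\in\{1,\dots,5\}$ with indices taken modulo $5$, $$\dot x_i=\kappa_1\big(s^+(x_{i-1})s^-(u_i)+s^-(x_{i-1})s^+(u_i)\big)-x_i,\qquad \dot u_i=\kappa_2\big(1-s^-(x_i)s^-(x_{i+1})\big)-u_i,$$ where $s^+(w)=1$ if $w>\tfrac12$ and $s^+(w)=0$ if $w<\tfrac12$, and $s^-=1-s^+$, with parameters $(\kappa_1,\kappa_2)=(1.53,2)$. Write states (boxes) as the Boolean strings $x_1u_1\ x_2u_2\ x_3u_3\ x_4u_4\ x_5u_5$, a bit being $1$ iff the variable exceeds $\tfrac12$. Then the system has an asymptotically stable periodic orbit that visits cyclically, in this order, the boxes $$\begin{array}{l}01\,11\,11\,01\,11,\;\ 01\,11\,01\,01\,11,\;\ 01\,11\,01\,11\,11,\;\ 01\,11\,01\,11\,01,\;\ 11\,11\,01\,11\,01,\\ 11\,01\,01\,11\,01,\;\ 11\,01\,11\,11\,01,\;\ 11\,01\,11\,01\,01,\;\ 11\,01\,11\,01\,11,\;\ 01\,01\,11\,01\,11,\end{array}$$ (the threshold-crossing variables being successively $x_3,x_4,x_5,x_1,x_2,x_3,x_4,x_5,x_1,x_2$). On the wall $\{x_2=\tfrac12\}$ separating the last box from the first, this orbit passes through the point whose translated coordinates $v=(x_1-\tfrac12,u_1-\tfrac12,\dots,x_5-\tfrac12,u_5-\tfrac12)$ are approximately $$v^*\approx(-0.157351,\,0.870170,\,0,\,1.46598,\,0.974368,\,1.49816,\,-0.420367,\,1.35362,\,0.790624,\,1.49209),$$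 and its period is $\log\lambda_{\max}\approx 7.29638$, where $\lambda_{\max}\approx 1474.96$.
   Context: Within each box (region where no variable equals $\tfrac12$) the right-hand side is of the form $\phi-v$ with constant focal point $\phi$, so solutions are $v(t)=\phi+(v(0)-\phi)e^{-t}$ until a variable reaches the threshold $\tfrac12$; trajectories are continued from box to box by crossing the threshold hyperplane (wall). A periodic orbit visits a cyclic sequence of boxes if its trajectory passes through exactly these boxes in this order, crossing a single threshold at each transition. Asymptotic stability refers to the orbit as an attractor of this piecewise-defined flow (equivalently, of the Poincaré return map on the wall). *)

From Stdlib Require Import Reals Lra Arith List.
Import ListNotations.
Open Scope R_scope.

(* A state of the 10-dimensional system: coordinates 0..9, ordered
   x1,u1,x2,u2,...,x5,u5, i.e. x_{i+1} is coordinate 2i and u_{i+1} is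
   coordinate 2i+1 (i = 0..4).  Coordinates >= 10 are irrelevant. *)
Definition state := nat -> R.

(* A box (regular domain) is a Boolean string: bit j is true iff
   coordinate j exceeds 1/2. *)
Definition box := nat -> bool.

Definition splus (b : bool) : R := if b then 1 else 0.
Definition sminus (b : bool) : R := 1 - splus b.

(* the focal point of a box:
   x_i-component: k1 (s+(x_{i-1}) s-(u_i) + s-(x_{i-1}) s+(u_i)),
   u_i-component: k2 (1 - s-(x_i) s-(x_{i+1})),   indices modulo 5. *)
Definition focal (k1 k2 : R) (b : box) : state := fun j =>
  let i := Nat.div j 2 in
  if Nat.even j then
    k1 * (splus (b (2 * ((i + 4) mod 5))%nat) * sminus (b (2 * i + 1)%nat)
          + sminus (b (2 * ((i + 4) mod 5))%nat) * splus (b (2 * i + 1)%nat))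
  else
    k2 * (1 - sminus (b (2 * i)%nat) * sminus (b (2 * ((i + 1) mod 5))%nat)).

Definition in_box (b : box) (v : state) : Prop :=
  forall j, (j < 10)%nat -> v j <> 1/2 /\ ((1/2 < v j) <-> b j = true).

(* g is a trajectory of the piecewise-linear flow on [0,T]: there is a finite
   subdivision 0 = ts 0 < ts 1 < ... < ts n = T and boxes bs k such that on
   [ts k, ts (k+1)] the trajectory is the explicit solution
   v(t) = phi + (v(ts k) - phi) e^{-(t - ts k)} of v' = phi - v with
   phi the focal point of bs k, and on the open interval it lies in box bs k.
   (Continuity at the switching times is built in.) *)
Definition traj_pieces (k1 k2 : R) (g : R -> state) (n : nat)
    (ts : nat -> R) (bs : nat -> box) (T : R) : Prop :=
  ts 0%nat = 0 /\ ts n = T /\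
  (forall k, (k < n)%nat -> ts k < ts (S k)) /\
  (forall k, (k < n)%nat -> forall t, ts k <= t <= ts (S k) ->
     (forall j, (j < 10)%nat ->
        g t j = focal k1 k2 (bs k) j
                + (g (ts k) j - focal k1 k2 (bs k) j) * exp (- (t - ts k))) /\
     (ts k < t < ts (S k) -> in_box (bs k) (g t))).

Definition solution_on (k1 k2 : R) (g : R -> state) (T : R) : Prop :=
  exists n ts bs, traj_pieces k1 k2 g n ts bs T.

Definition solution (k1 k2 : R) (g : R -> state) : Prop :=
  forall T, 0 < T -> solution_on k1 k2 g T.

Definition near_orbit (g : R -> state) (T eps : R) (v : state) : Prop :=
  exists t, 0 <= t <= T /\ forall j, (j < 10)%nat -> Rabs (v j - g t j) < eps.

Definition asymptotically_stable_orbit (k1 k2 : R) (g : R -> state) (T : R)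
  : Prop :=
  (exists d, 0 < d /\ forall p, near_orbit g T d p ->
      exists h, solution k1 k2 h /\ h 0 = p) /\
  (forall eps, 0 < eps -> exists d, 0 < d /\
      forall h, solution k1 k2 h -> near_orbit g T d (h 0) ->
        forall t, 0 <= t -> near_orbit g T eps (h t)) /\
  (exists d, 0 < d /\
      forall h, solution k1 k2 h -> near_orbit g T d (h 0) ->
        forall eps, 0 < eps -> exists t0, 0 <= t0 /\
          forall t, t0 <= t -> near_orbit g T eps (h t)).

Definition mkbox (l : list bool) : box := fun j => List.nth j l false.

Definition cycle_boxes : list (list bool) :=
  let o := false in let i := true in
  [ [o;i; i;i; i;i; o;i; i;i];
    [o;i; i;i; o;i; o;i; i;i];
    [o;i; i;i; o;i; i;i; i;i];
    [o;i; i;i; o;i; i;i; o;i];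
    [i;i; i;i; o;i; i;i; o;i];
    [i;i; o;i; o;i; i;i; o;i];
    [i;i; o;i; i;i; i;i; o;i];
    [i;i; o;i; i;i; o;i; o;i];
    [i;i; o;i; i;i; o;i; i;i];
    [o;i; o;i; i;i; o;i; i;i] ]%list.

Definition cycle_box (k : nat) : box := mkbox (List.nth k cycle_boxes nil).

Definition vstar : list R :=
  [-157351/1000000; 870170/1000000; 0; 146598/100000; 974368/1000000;
   149816/100000; -420367/1000000; 135362/100000; 790624/1000000;
   149209/100000]%list.

Definition kappa1 : R := 153 / 100.
Definition kappa2 : R := 2.

(* Inside a box the flow is affine and the time needed to reach the exit wall is
   explicit, so passing through the m-th box of the cycle is the wall map
   [P_m w = phi_m + (w - phi_m) / rho_m w], where [rho_m w] is the exponential of the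
   transit time.  A numerical certificate (approximate crossing points [apx m],
   weights [wt m], a radius [rad]) shows that every [P_m] maps the [wt m]-weighted
   ball of radius [rad] around [apx m] into the corresponding ball around
   [apx (S m)] and contracts weighted distances by [4/5].  Hence the return map
   [P_9 o ... o P_0] has a fixed point, whose trajectory is the periodic orbit; its
   period is [sum_m ln (rho_m)], and [prod_m rho_m] is enclosed by the certificate.
   For stability, a point near the orbit is moved along the flow of its box onto a
   state weighted-close to an orbit point.  The solution through it is unique and
   crosses the same walls, and by the contraction its distance to the orbit decays
   like [(4/5)^n] after [n] crossings, each of which lasts at least [ln (7/5)]. *)

From Stdlib Require Import Reals Lra Lia List Arith ClassicalEpsilon FunctionalExtensionality.
Import ListNotations.
Open Scope R_scope.

Lemma Rabs_le_iff x b : Rabs x <= b <-> -b <= x <= b.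
Proof. unfold Rabs; destruct Rcase_abs; split; intros; lra. Qed.

Lemma exp_neg_lt_1 u : 0 < u -> exp (- u) < 1.
Proof. intros H. rewrite <- exp_0. apply exp_increasing. lra. Qed.

Lemma exp_neg_le_1 u : 0 <= u -> exp (- u) <= 1.
Proof.
  intros H. destruct (Req_dec u 0) as [->|Hn].
  - rewrite Ropp_0, exp_0; lra.
  - left; apply exp_neg_lt_1; lra.
Qed.

Lemma one_minus_exp_neg_bounds u : 0 <= u -> 0 <= 1 - exp (- u) <= u.
Proof. intros Hu. pose proof (exp_neg_le_1 u Hu). pose proof (exp_ineq1_le (- u)). lra. Qed.

Lemma exp_le_mono x y : x <= y -> exp x <= exp y.
Proof. intros H. destruct (Req_dec x y) as [->|Hn]; [lra|left; apply exp_increasing; lra]. Qed.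

Lemma ln_pos_of_gt_1 x : 1 < x -> 0 < ln x.
Proof. intros H. rewrite <- ln_1. apply ln_increasing; lra. Qed.

Lemma eq_of_forall_abs_le x y : (forall e, 0 < e -> Rabs (x - y) <= e) -> x = y.
Proof.
  intros H. destruct (Req_dec x y) as [?|Hn]; [assumption|]. exfalso.
  assert (0 < Rabs (x - y)) by (apply Rabs_pos_lt; lra).
  specialize (H (Rabs (x - y) / 2) ltac:(lra)). lra.
Qed.

Lemma Un_cv_bounds u l lo hi : Un_cv u l -> (forall n, lo <= u n <= hi) -> lo <= l <= hi.
Proof.
  intros Hc Hb. split.
  - destruct (Rle_dec lo l) as [?|Hn]; [assumption|]. exfalso.
    destruct (Hc (lo - l) ltac:(lra)) as [N HN]. specialize (HN N (le_n N)). specialize (Hb N).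
    unfold R_dist in HN. apply Rabs_def2 in HN. lra.
  - destruct (Rle_dec l hi) as [?|Hn]; [assumption|]. exfalso.
    destruct (Hc (l - hi) ltac:(lra)) as [N HN]. specialize (HN N (le_n N)). specialize (Hb N).
    unfold R_dist in HN. apply Rabs_def2 in HN. lra.
Qed.

Lemma eventually_forall_lt (P : nat -> nat -> Prop) K :
  (forall j, (j < K)%nat -> exists N, forall n, (N <= n)%nat -> P j n) ->
  exists N, forall n, (N <= n)%nat -> forall j, (j < K)%nat -> P j n.
Proof.
  induction K as [|K IH]; intros H.
  - exists 0%nat. intros; lia.
  - destruct IH as [N1 H1]. { intros j Hj. apply H. lia. }
    destruct (H K ltac:(lia)) as [N2 H2]. exists (Nat.max N1 N2). intros n Hn j Hj.
    destruct (Nat.eq_dec j K) as [->|Hne]; [apply H2|apply H1]; lia.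
Qed.

Definition lies_between (x1 x2 x : R) : Prop := (x1 <= x <= x2) \/ (x2 <= x <= x1).

Lemma abs_sub_between x1 x2 x c d :
  Rabs (x1 - c) <= d -> Rabs (x2 - c) <= d -> lies_between x1 x2 x -> Rabs (x - c) <= d.
Proof.
  intros H1 H2 H. apply Rabs_le_iff in H1. apply Rabs_le_iff in H2. apply Rabs_le_iff.
  unfold lies_between in H. lra.
Qed.

Lemma Rinv_diff_bound A B L : 0 < L <= A -> L <= B -> Rabs (/ A - / B) <= Rabs (A - B) / (L * L).
Proof.
  intros HA HB. replace (/ A - / B) with ((B - A) / (A * B)) by (field; lra).
  unfold Rdiv. rewrite Rabs_mult, Rabs_inv, (Rabs_minus_sym B A), (Rabs_pos_eq (A * B)) by nra.
  apply Rmult_le_compat_l; [apply Rabs_pos|apply Rinv_le_contravar; nra].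
Qed.

(* The difference of the two rescalings is [(w_i - v_i) / A + (v_i - F_i) (/A - /B)],
   where [A - B = (v_c - w_c) / (F_c - 1/2)]. *)
Lemma rescale_diff_bound (Fi Fc wi wc vi vc L yi yc y2 e M q : R) :
  Fc - 1/2 <> 0 -> 0 < L ->
  L <= (Fc - wc) / (Fc - 1/2) -> L <= (Fc - vc) / (Fc - 1/2) ->
  Rabs (wi - vi) <= e * yi -> Rabs (wc - vc) <= e * yc -> Rabs (vi - Fi) <= M ->
  0 <= e -> 0 <= yc ->
  yi / L + M * yc / (Rabs (Fc - 1/2) * L * L) <= q * y2 ->
  Rabs ((Fi + (wi - Fi) / ((Fc - wc) / (Fc - 1/2))) -
        (Fi + (vi - Fi) / ((Fc - vc) / (Fc - 1/2)))) <= q * e * y2.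
Proof.
  intros Hd HL HA HB H1 H2 H3 He Hyc Hn.
  assert (Hd0 : 0 < Rabs (Fc - 1/2)) by (apply Rabs_pos_lt; exact Hd).
  assert (HAB : Rabs ((Fc - wc) / (Fc - 1/2) - (Fc - vc) / (Fc - 1/2)) = Rabs (wc - vc) / Rabs (Fc - 1/2)).
  { replace ((Fc - wc) / (Fc - 1/2) - (Fc - vc) / (Fc - 1/2)) with ((vc - wc) * / (Fc - 1/2))
      by (field; intro; apply Hd; lra).
    rewrite Rabs_mult, Rabs_inv, (Rabs_minus_sym vc wc). reflexivity. }
  pose proof (Rinv_diff_bound _ _ L (conj HL HA) HB) as Hinv. rewrite HAB in Hinv.
  set (A := (Fc - wc) / (Fc - 1/2)) in *. set (B := (Fc - vc) / (Fc - 1/2)) in *.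
  replace (Fi + (wi - Fi) / A - (Fi + (vi - Fi) / B)) with ((wi - vi) * / A + (vi - Fi) * (/ A - / B))
    by (field; lra).
  eapply Rle_trans; [apply Rabs_triang|]. rewrite !Rabs_mult, Rabs_inv, (Rabs_pos_eq A) by lra.
  assert (T1 : Rabs (wi - vi) * / A <= e * yi / L).
  { apply Rmult_le_compat; [apply Rabs_pos|left; apply Rinv_0_lt_compat; lra|exact H1|].
    apply Rinv_le_contravar; lra. }
  assert (T2 : Rabs (vi - Fi) * Rabs (/ A - / B) <= M * (e * yc / Rabs (Fc - 1/2) / (L * L))).
  { apply Rmult_le_compat; [apply Rabs_pos|apply Rabs_pos|exact H3|].
    eapply Rle_trans; [exact Hinv|]. unfold Rdiv. apply Rmult_le_compat_r; [left; apply Rinv_0_lt_compat; nra|].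
    apply Rmult_le_compat_r; [left; apply Rinv_0_lt_compat; lra|exact H2]. }
  assert (E : e * yi / L + M * (e * yc / Rabs (Fc - 1/2) / (L * L)) =
              e * (yi / L + M * yc / (Rabs (Fc - 1/2) * L * L))) by (field; lra).
  assert (e * (yi / L + M * yc / (Rabs (Fc - 1/2) * L * L)) <= e * (q * y2))
    by (apply Rmult_le_compat_l; lra).
  lra.
Qed.

Lemma exp_mul_pow2_le (u : nat -> R) z n :
  exp z <= u 0%nat -> (forall i, (i < n)%nat -> u i * u i <= u (S i)) ->
  exp (z * 2 ^ n) <= u n.
Proof.
  intros H0 Hs. induction n as [|n IH].
  - simpl. rewrite Rmult_1_r. exact H0.
  - replace (z * 2 ^ S n) with (z * 2 ^ n + z * 2 ^ n) by (simpl; ring). rewrite exp_plus.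
    pose proof (exp_pos (z * 2 ^ n)). specialize (IH ltac:(intros i Hi; apply Hs; lia)).
    eapply Rle_trans; [|apply Hs; lia]. apply Rmult_le_compat; lra.
Qed.

Lemma exp_mul_pow2_ge (u : nat -> R) z n :
  u 0%nat <= exp z -> (forall i, (i < n)%nat -> 0 <= u i /\ u (S i) <= u i * u i) ->
  u n <= exp (z * 2 ^ n).
Proof.
  intros H0 Hs. induction n as [|n IH].
  - simpl. rewrite Rmult_1_r. exact H0.
  - replace (z * 2 ^ S n) with (z * 2 ^ n + z * 2 ^ n) by (simpl; ring). rewrite exp_plus.
    specialize (IH ltac:(intros i Hi; apply Hs; lia)). destruct (Hs n ltac:(lia)) as [Hp Hn].
    eapply Rle_trans; [exact Hn|]. apply Rmult_le_compat; lra.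
Qed.

Lemma ln_le_mono x y : 0 < x -> x <= y -> ln x <= ln y.
Proof. intros Hx H. destruct (Req_dec x y) as [->|Hn]; [lra|left; apply ln_increasing; lra]. Qed.

Notation foc b := (focal kappa1 kappa2 b).

Definition box_of (m : nat) : box := cycle_box (m mod 10).
Definition phi (m j : nat) : R := foc (box_of m) j.
Definition exit_table : list nat := [4; 6; 8; 0; 2; 4; 6; 8; 0; 2]%nat.
Definition exit_var (m : nat) : nat := nth (m mod 10) exit_table 0%nat.
Definition entry_var (m : nat) : nat := exit_var (m + 9).

Definition on_side (b : box) (j : nat) (x : R) : Prop := if b j then 1/2 < x else x < 1/2.
Definition on_side_cl (b : box) (j : nat) (x : R) : Prop := if b j then 1/2 <= x else x <= 1/2.

Definition flow (m : nat) (w : state) (u : R) : state :=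
  fun j => phi m j + (w j - phi m j) * exp (- u).
(* [exit_factor m w] is [exp] of the time the flow of box [m] needs to bring the exit
   variable from [w] to the threshold. *)
Definition exit_factor (m : nat) (w : state) : R :=
  (phi m (exit_var m) - w (exit_var m)) / (phi m (exit_var m) - 1/2).
Definition wall_map (m : nat) (w : state) : state :=
  fun j => phi m j + (w j - phi m j) / exit_factor m w.

(* Numerical certificate.  [apx m] approximates the crossing point of the orbit on
   the entry wall of box [m]; [wt m] are the weights of the sup-norm in which
   [wall_map m] contracts by [contr] on the ball of radius [rad] around [apx m];
   [exf_lo m] and [exf_hi m] enclose [exit_factor m] on that ball; [focal_tab] is the
   table of focal points. *)
Definition rad : R := 1/10000000.
Definition contr : R := 4/5.
Definition apx_table : list (list R) := [
  [342649375205085665780437/1000000000000000000000000; 685085242787700152276863/500000000000000000000000; 1/2; 982990906780700982598981/500000000000000000000000; 737183955158272713535091/500000000000000000000000; 399632523728384356506491/200000000000000000000000; 19908293158528534917023/250000000000000000000000; 1853624941174298062377531/1000000000000000000000000; 258124723552147206377083/200000000000000000000000; 1992094028737852049515939/1000000000000000000000000];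
  [116202127300613576754653/1000000000000000000000000; 1786406937502669913281217/1000000000000000000000000; 590348884631709741907323/500000000000000000000000; 1988463467564451276741163/1000000000000000000000000; 1/2; 1999376891837776185257281/1000000000000000000000000; 27005868778376006276611/1000000000000000000000000; 1950360063522314675229761/1000000000000000000000000; 1448820675435119148724803/1000000000000000000000000; 399463772155726683866557/200000000000000000000000];
  [19908293158528534917023/250000000000000000000000; 1853624941174298062377531/1000000000000000000000000; 258124723552147206377083/200000000000000000000000; 1992094028737852049515939/1000000000000000000000000; 342649375205085665780437/1000000000000000000000000; 685085242787700152276863/500000000000000000000000; 1/2; 982990906780700982598981/500000000000000000000000; 737183955158272713535091/500000000000000000000000; 399632523728384356506491/200000000000000000000000];
  [27005868778376006276611/1000000000000000000000000; 1950360063522314675229761/1000000000000000000000000; 1448820675435119148724803/1000000000000000000000000; 399463772155726683866557/200000000000000000000000; 116202127300613576754653/1000000000000000000000000; 1786406937502669913281217/1000000000000000000000000; 590348884631709741907323/500000000000000000000000; 1988463467564451276741163/1000000000000000000000000; 1/2; 1999376891837776185257281/1000000000000000000000000];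
  [1/2; 982990906780700982598981/500000000000000000000000; 737183955158272713535091/500000000000000000000000; 399632523728384356506491/200000000000000000000000; 19908293158528534917023/250000000000000000000000; 1853624941174298062377531/1000000000000000000000000; 258124723552147206377083/200000000000000000000000; 1992094028737852049515939/1000000000000000000000000; 342649375205085665780437/1000000000000000000000000; 685085242787700152276863/500000000000000000000000];
  [590348884631709741907323/500000000000000000000000; 1988463467564451276741163/1000000000000000000000000; 1/2; 1999376891837776185257281/1000000000000000000000000; 27005868778376006276611/1000000000000000000000000; 1950360063522314675229761/1000000000000000000000000; 1448820675435119148724803/1000000000000000000000000; 399463772155726683866557/200000000000000000000000; 116202127300613576754653/1000000000000000000000000; 1786406937502669913281217/1000000000000000000000000];
  [258124723552147206377083/200000000000000000000000; 1992094028737852049515939/1000000000000000000000000; 342649375205085665780437/1000000000000000000000000; 685085242787700152276863/500000000000000000000000; 1/2; 982990906780700982598981/500000000000000000000000; 737183955158272713535091/500000000000000000000000; 399632523728384356506491/200000000000000000000000; 19908293158528534917023/250000000000000000000000; 1853624941174298062377531/1000000000000000000000000];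
  [1448820675435119148724803/1000000000000000000000000; 399463772155726683866557/200000000000000000000000; 116202127300613576754653/1000000000000000000000000; 1786406937502669913281217/1000000000000000000000000; 590348884631709741907323/500000000000000000000000; 1988463467564451276741163/1000000000000000000000000; 1/2; 1999376891837776185257281/1000000000000000000000000; 27005868778376006276611/1000000000000000000000000; 1950360063522314675229761/1000000000000000000000000];
  [737183955158272713535091/500000000000000000000000; 399632523728384356506491/200000000000000000000000; 19908293158528534917023/250000000000000000000000; 1853624941174298062377531/1000000000000000000000000; 258124723552147206377083/200000000000000000000000; 1992094028737852049515939/1000000000000000000000000; 342649375205085665780437/1000000000000000000000000; 685085242787700152276863/500000000000000000000000; 1/2; 982990906780700982598981/500000000000000000000000];
  [1/2; 1999376891837776185257281/1000000000000000000000000; 27005868778376006276611/1000000000000000000000000; 1950360063522314675229761/1000000000000000000000000; 1448820675435119148724803/1000000000000000000000000; 399463772155726683866557/200000000000000000000000; 116202127300613576754653/1000000000000000000000000; 1786406937502669913281217/1000000000000000000000000; 590348884631709741907323/500000000000000000000000; 1988463467564451276741163/1000000000000000000000000]].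
Definition weight_table : list (list R) := [
  [1; 468/625; 19/20; 2429/5000; 6923/10000; 959/5000; 3717/5000; 7031/10000; 393/400; 1547/5000];
  [997/2000; 897/2000; 1539/2500; 431/2000; 1189/2000; 829/10000; 3353/10000; 663/2000; 2351/5000; 673/5000];
  [4551/10000; 861/2000; 3009/5000; 1893/10000; 3063/5000; 459/1000; 5819/10000; 2973/10000; 4237/10000; 587/5000];
  [2053/10000; 203/1000; 36/125; 103/1250; 1527/5000; 2749/10000; 377/1000; 33/250; 3639/10000; 127/2500];
  [3563/10000; 1821/10000; 649/2500; 719/10000; 697/2500; 2639/10000; 1843/5000; 29/250; 3751/10000; 2811/10000];
  [231/1000; 809/10000; 223/1000; 39/1250; 1259/10000; 249/2000; 353/2000; 101/2000; 1871/10000; 421/2500];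
  [2259/10000; 89/1250; 2299/10000; 69/400; 1093/5000; 559/5000; 199/1250; 221/5000; 1709/10000; 809/5000];
  [541/5000; 311/10000; 1147/10000; 517/5000; 1417/10000; 497/10000; 171/1250; 12/625; 193/2500; 191/2500];
  [61/625; 17/625; 131/1250; 497/5000; 693/5000; 219/5000; 1411/10000; 1059/10000; 1341/10000; 343/5000];
  [839/10000; 119/10000; 237/5000; 47/1000; 133/2000; 12/625; 141/2000; 127/2000; 87/1000; 153/5000]].
Definition focal_table : list (list R) := [
  [0; 2; 153/100; 2; 0; 2; 0; 2; 153/100; 2];
  [0; 2; 153/100; 2; 0; 0; 153/100; 2; 153/100; 2];
  [0; 2; 153/100; 2; 0; 2; 153/100; 2; 0; 2];
  [153/100; 2; 153/100; 2; 0; 2; 153/100; 2; 0; 0];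
  [153/100; 2; 0; 2; 0; 2; 153/100; 2; 0; 2];
  [153/100; 2; 0; 0; 153/100; 2; 153/100; 2; 0; 2];
  [153/100; 2; 0; 2; 153/100; 2; 0; 2; 0; 2];
  [153/100; 2; 0; 2; 153/100; 2; 0; 0; 153/100; 2];
  [0; 2; 0; 2; 153/100; 2; 0; 2; 153/100; 2];
  [0; 0; 153/100; 2; 153/100; 2; 0; 2; 153/100; 2]].
Definition exf_lo_table : list R := [294873568217309/100000000000000; 182402196321799/125000000000000; 294873573589309/100000000000000; 1459217583195751/1000000000000000; 294873576871309/100000000000000; 1459217590904489/1000000000000000; 294873578879309/100000000000000; 364804398908161/250000000000000; 294873580111309/100000000000000; 182402199815731/125000000000000].
Definition exf_hi_table : list R := [2948735959093091/1000000000000000; 1459217635681189/1000000000000000; 2948735905373091/1000000000000000; 145921762305983/100000000000000; 2948735872553091/1000000000000000; 364804403837773/250000000000000; 2948735852473091/1000000000000000; 182402201327867/125000000000000; 2948735840153091/1000000000000000; 1459217607729733/1000000000000000].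
Definition apx (m j : nat) : R := nth j (nth (m mod 10) apx_table nil) 0.
Definition wt (m j : nat) : R := nth j (nth (m mod 10) weight_table nil) 0.
Definition focal_tab (m j : nat) : R := nth j (nth (m mod 10) focal_table nil) 0.
Definition exf_lo (m : nat) : R := nth (m mod 10) exf_lo_table 0.
Definition exf_hi (m : nat) : R := nth (m mod 10) exf_hi_table 0.

Ltac unfold_tables :=
  cbv [apx wt focal_tab exf_lo exf_hi apx_table weight_table focal_table exf_lo_table
       exf_hi_table exit_var entry_var exit_table box_of nth Nat.modulo Nat.divmod
       fst snd Nat.sub Nat.add] in *.

Lemma lt10_cases m : (m < 10)%nat ->
  m = 0%nat \/ m = 1%nat \/ m = 2%nat \/ m = 3%nat \/ m = 4%nat \/
  m = 5%nat \/ m = 6%nat \/ m = 7%nat \/ m = 8%nat \/ m = 9%nat.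
Proof. lia. Qed.

Ltac case_lt10 H :=
  let E := fresh in
  destruct (lt10_cases _ H) as [E|[E|[E|[E|[E|[E|[E|[E|[E|E]]]]]]]]]; subst.

Lemma mod10_add x k : ((x + k) mod 10 = (x mod 10 + k) mod 10)%nat.
Proof. rewrite Nat.Div0.add_mod_idemp_l. reflexivity. Qed.

Lemma mod10_S m : (S m mod 10 = S (m mod 10) mod 10)%nat.
Proof.
  replace (S m) with (m + 1)%nat by lia. replace (S (m mod 10)) with (m mod 10 + 1)%nat by lia.
  apply mod10_add.
Qed.

Lemma mod10_S_add9 m : ((S m + 9) mod 10 = (S (m mod 10) + 9) mod 10)%nat.
Proof.
  replace (S m + 9)%nat with (m + 10)%nat by lia.
  replace (S (m mod 10) + 9)%nat with (m mod 10 + 10)%nat by lia. apply mod10_add.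
Qed.

Lemma mod10_add10 m : ((m + 10) mod 10 = m mod 10)%nat.
Proof. replace (m + 10)%nat with (m + 1 * 10)%nat by lia. apply Nat.Div0.mod_add. Qed.

(* Reduces a goal about the cycle index [m] to the ten cases [m = 0, ..., 9]. *)
Ltac reduce_index m :=
  unfold apx, wt, focal_tab, exf_lo, exf_hi, entry_var, exit_var, box_of in *;
  rewrite ?(mod10_S_add9 m), ?(mod10_add m 9), ?(mod10_S m) in *;
  repeat match goal with H : context [m] |- _ => revert H end;
  let Hm := fresh "Hm" in
  generalize (Nat.mod_upper_bound m 10 ltac:(lia)); generalize (m mod 10); clear m;
  intros m Hm; case_lt10 Hm; intros.

Ltac solve_abs :=
  repeat match goal with |- context [Rabs ?x] =>
    (rewrite (Rabs_pos_eq x) by lra) || (rewrite (Rabs_left x) by lra) end;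
  rewrite ?Ropp_minus_distr; lra.

Lemma phi_eq_tab m j : (j < 10)%nat -> phi m j = focal_tab m j.
Proof.
  intros Hj. unfold phi, focal_tab, box_of.
  assert (Hm : (m mod 10 < 10)%nat) by (apply Nat.mod_upper_bound; lia).
  generalize (m mod 10) Hm; clear m Hm; intros m Hm.
  case_lt10 Hm; case_lt10 Hj;
  cbv [focal cycle_box mkbox cycle_boxes splus sminus kappa1 kappa2 focal_table nth
       Nat.modulo Nat.divmod fst snd Nat.sub Nat.add Nat.mul Nat.div Nat.even]; lra.
Qed.

Lemma exit_var_lt m : (exit_var m < 10)%nat.
Proof. reduce_index m; unfold_tables; lia. Qed.

Lemma entry_var_lt m : (entry_var m < 10)%nat.
Proof. reduce_index m; unfold_tables; lia. Qed.

Lemma entry_var_neq_exit_var m : entry_var m <> exit_var m.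
Proof. reduce_index m; unfold_tables; lia. Qed.

Lemma entry_var_S m : entry_var (S m) = exit_var m.
Proof. reduce_index m; unfold_tables; lia. Qed.

Lemma box_of_S m j : (j < 10)%nat ->
  box_of (S m) j = if Nat.eqb j (exit_var m) then negb (box_of m j) else box_of m j.
Proof.
  intros Hj. case_lt10 Hj; reduce_index m;
  cbv [cycle_box mkbox cycle_boxes nth Nat.modulo Nat.divmod fst snd Nat.sub Nat.add
       exit_table Nat.eqb negb]; reflexivity.
Qed.

Lemma box_of_add10 m : box_of (m + 10) = box_of m.
Proof. unfold box_of. rewrite mod10_add10. reflexivity. Qed.

Lemma exit_var_add10 m : exit_var (m + 10) = exit_var m.
Proof. unfold exit_var. rewrite mod10_add10. reflexivity. Qed.

Lemma entry_var_add10 m : entry_var (m + 10) = entry_var m.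
Proof.
  unfold entry_var. replace (m + 10 + 9)%nat with (m + 9 + 10)%nat by lia.
  apply exit_var_add10.
Qed.

Lemma focal_exit_opposite m :
  if box_of m (exit_var m) then focal_tab m (exit_var m) < 1/2
  else 1/2 < focal_tab m (exit_var m).
Proof. reduce_index m; cbv [cycle_box mkbox cycle_boxes]; unfold_tables; lra. Qed.

Lemma focal_entry_side m : on_side (box_of m) (entry_var m) (focal_tab m (entry_var m)).
Proof. unfold on_side. reduce_index m; cbv [cycle_box mkbox cycle_boxes]; unfold_tables; lra. Qed.

Lemma focal_tab_range m j : (j < 10)%nat -> 0 <= focal_tab m j <= 2.
Proof. intros Hj. case_lt10 Hj; reduce_index m; unfold_tables; lra. Qed.

Lemma focal_tab_far m j : (j < 10)%nat ->
  focal_tab m j - 1/2 >= 1/2 \/ focal_tab m j - 1/2 <= - (1/2).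
Proof. intros Hj. case_lt10 Hj; reduce_index m; unfold_tables; lra. Qed.

Lemma apx_margin m j : (j < 10)%nat -> j <> entry_var m ->
  if box_of m j then 1/2 + 3/20 <= apx m j else apx m j <= 1/2 - 3/20.
Proof.
  intros Hj Hne. case_lt10 Hj; reduce_index m; cbv [cycle_box mkbox cycle_boxes];
  unfold_tables; try lia; lra.
Qed.

Lemma apx_ball_range m j : (j < 10)%nat ->
  0 <= apx m j - rad * wt m j /\ apx m j + rad * wt m j <= 2.
Proof. intros Hj. unfold rad. reduce_index m; case_lt10 Hj; unfold_tables; lra. Qed.

Lemma wt_bounds m j : (j < 10)%nat -> 1/100 <= wt m j <= 1.
Proof. intros Hj. case_lt10 Hj; reduce_index m; unfold_tables; lra. Qed.

Lemma exf_bounds m : 7/5 <= exf_lo m /\ exf_hi m <= 3.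
Proof. reduce_index m; unfold_tables; lra. Qed.

Lemma exit_factor_enclosure m x :
  apx m (exit_var m) - rad * wt m (exit_var m) <= x <= apx m (exit_var m) + rad * wt m (exit_var m) ->
  exf_lo m <= (focal_tab m (exit_var m) - x) / (focal_tab m (exit_var m) - 1/2) <= exf_hi m.
Proof. unfold rad. reduce_index m; unfold_tables; intros; lra. Qed.

Lemma cert_contraction m i : (i < 10)%nat ->
  wt m i / exf_lo m + (Rabs (apx m i - focal_tab m i) + rad * wt m i) * wt m (exit_var m)
     / (Rabs (focal_tab m (exit_var m) - 1/2) * exf_lo m * exf_lo m) <= contr * wt (S m) i.
Proof. intros Hi. unfold rad, contr. case_lt10 Hi; reduce_index m; unfold_tables; solve_abs. Qed.

Lemma cert_invariance m i : (i < 10)%nat ->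
  Rabs (focal_tab m i + (apx m i - focal_tab m i)
          / ((focal_tab m (exit_var m) - apx m (exit_var m)) / (focal_tab m (exit_var m) - 1/2))
        - apx (S m) i) <= (1 - contr) * (rad / 2) * wt (S m) i.
Proof. intros Hi. unfold rad, contr. case_lt10 Hi; reduce_index m; unfold_tables; solve_abs. Qed.

Lemma phi_exit_ne_half m : phi m (exit_var m) - 1/2 <> 0.
Proof.
  rewrite phi_eq_tab by apply exit_var_lt.
  destruct (focal_tab_far m (exit_var m) (exit_var_lt m)); lra.
Qed.

Lemma exit_factor_flow m w s : exit_factor m (flow m w s) = exit_factor m w * exp (- s).
Proof. unfold exit_factor, flow. pose proof (phi_exit_ne_half m). field. lra. Qed.

Lemma exit_factor_ext m v w : v (exit_var m) = w (exit_var m) -> exit_factor m v = exit_factor m w.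
Proof. intros E. unfold exit_factor. rewrite E. reflexivity. Qed.

Lemma wall_map_ext m v w : (forall j, (j < 10)%nat -> v j = w j) ->
  forall j, (j < 10)%nat -> wall_map m v j = wall_map m w j.
Proof.
  intros E j Hj. unfold wall_map. rewrite (exit_factor_ext m v w) by (apply E, exit_var_lt).
  rewrite E by exact Hj. reflexivity.
Qed.

Lemma wall_map_flow m w s j : exit_factor m w <> 0 -> wall_map m (flow m w s) j = wall_map m w j.
Proof.
  intros H. unfold wall_map. rewrite exit_factor_flow. unfold flow.
  pose proof (exp_pos (- s)). pose proof (phi_exit_ne_half m). unfold exit_factor in *.
  assert (phi m (exit_var m) - w (exit_var m) <> 0).
  { intro E. apply H. rewrite E. unfold Rdiv. ring. }
  field. repeat split; lra.
Qed.

Lemma wall_map_exit m w : exit_factor m w <> 0 -> wall_map m w (exit_var m) = 1/2.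
Proof.
  intros H. unfold wall_map. pose proof (phi_exit_ne_half m). unfold exit_factor in *.
  assert (phi m (exit_var m) - w (exit_var m) <> 0).
  { intro E. apply H. rewrite E. unfold Rdiv. ring. }
  field. repeat split; lra.
Qed.

Lemma flow_exit_time m w j : 0 < exit_factor m w ->
  flow m w (ln (exit_factor m w)) j = wall_map m w j.
Proof. intros H. unfold flow, wall_map. rewrite exp_Ropp, exp_ln by exact H. field. lra. Qed.

Lemma flow_0 m w j : flow m w 0 j = w j.
Proof. unfold flow. rewrite Ropp_0, exp_0. ring. Qed.

Lemma flow_add m w s u j : flow m (flow m w s) u j = flow m w (s + u) j.
Proof. unfold flow. rewrite Ropp_plus_distr, exp_plus. ring. Qed.

Lemma flow_sub m v s t j : flow m v s j - flow m v t j = (v j - phi m j) * (exp (- s) - exp (- t)).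
Proof. unfold flow. ring. Qed.

Lemma flow_between m w s1 s s2 j : s1 <= s <= s2 ->
  lies_between (flow m w s1 j) (flow m w s2 j) (flow m w s j).
Proof.
  intros Hs. unfold lies_between, flow.
  assert (E1 : exp (- s2) <= exp (- s)) by (apply exp_le_mono; lra).
  assert (E2 : exp (- s) <= exp (- s1)) by (apply exp_le_mono; lra).
  destruct (Rle_dec 0 (w j - phi m j)).
  - right. split; apply Rplus_le_compat_l; apply Rmult_le_compat_l; lra.
  - left. split; apply Rplus_le_compat_l; nra.
Qed.

Lemma exit_factor_gt_1 m x : on_side (box_of m) (exit_var m) (x (exit_var m)) -> 1 < exit_factor m x.
Proof.
  intros Hs. pose proof (focal_exit_opposite m) as H1.
  unfold exit_factor. rewrite phi_eq_tab by apply exit_var_lt. unfold on_side in Hs. revert H1 Hs.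
  destruct (box_of m (exit_var m)); intros H1 Hs.
  - replace ((focal_tab m (exit_var m) - x (exit_var m)) / (focal_tab m (exit_var m) - 1/2))
      with (1 + (x (exit_var m) - 1/2) / (1/2 - focal_tab m (exit_var m))) by (field; lra).
    assert (0 < (x (exit_var m) - 1/2) / (1/2 - focal_tab m (exit_var m)))
      by (apply Rdiv_lt_0_compat; lra). lra.
  - replace ((focal_tab m (exit_var m) - x (exit_var m)) / (focal_tab m (exit_var m) - 1/2))
      with (1 + (1/2 - x (exit_var m)) / (focal_tab m (exit_var m) - 1/2)) by (field; lra).
    assert (0 < (1/2 - x (exit_var m)) / (focal_tab m (exit_var m) - 1/2))
      by (apply Rdiv_lt_0_compat; lra). lra.
Qed.

Definition in_ball (m : nat) (r : R) (w : state) : Prop :=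
  forall j, (j < 10)%nat -> Rabs (w j - apx m j) <= r * wt m j.
Definition wclose (m : nat) (e : R) (v w : state) : Prop :=
  forall j, (j < 10)%nat -> Rabs (v j - w j) <= e * wt m j.

Lemma wt_pos m j : (j < 10)%nat -> 0 < wt m j.
Proof. intros H. destruct (wt_bounds m j H). lra. Qed.

Lemma rad_pos : 0 < rad.
Proof. unfold rad; lra. Qed.

Lemma contr_bounds : 0 < contr < 1.
Proof. unfold contr; lra. Qed.

Lemma contr_pow_bounds n : 0 < contr ^ n <= 1.
Proof. induction n as [|n IH]; simpl; unfold contr in *; nra. Qed.

Lemma contr_pow_antimono n0 n : (n0 <= n)%nat -> contr ^ n <= contr ^ n0.
Proof.
  intros H. induction H as [|n H IH]; [lra|]. simpl.
  pose proof (contr_pow_bounds n). unfold contr in *. nra.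
Qed.

Lemma in_ball_weaken m r r' w : r <= r' -> in_ball m r w -> in_ball m r' w.
Proof.
  intros Hr H j Hj. eapply Rle_trans; [apply H; exact Hj|].
  apply Rmult_le_compat_r; [left; apply wt_pos; exact Hj| exact Hr].
Qed.

Lemma apx_in_ball m r : 0 <= r -> in_ball m r (fun j => apx m j).
Proof.
  intros Hr j Hj. unfold Rminus. rewrite Rplus_opp_r, Rabs_R0.
  apply Rmult_le_pos; [lra| left; apply wt_pos; exact Hj].
Qed.

Lemma wclose_of_in_ball m r w w' : in_ball m r w -> in_ball m r w' -> wclose m (2 * r) w w'.
Proof.
  intros H H' j Hj. pose proof (H j Hj). pose proof (H' j Hj).
  replace (w j - w' j) with ((w j - apx m j) - (w' j - apx m j)) by ring.
  eapply Rle_trans; [apply Rabs_triang|]. rewrite Rabs_Ropp. lra.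
Qed.

Lemma exit_factor_in_ball m w : in_ball m rad w -> exf_lo m <= exit_factor m w <= exf_hi m.
Proof.
  intros H. unfold exit_factor. rewrite phi_eq_tab by apply exit_var_lt.
  apply exit_factor_enclosure. pose proof (H _ (exit_var_lt m)) as H1.
  apply Rabs_le_iff in H1. lra.
Qed.

Lemma exit_factor_in_ball_gt_1 m w : in_ball m rad w -> 1 < exit_factor m w.
Proof. intros H. pose proof (exit_factor_in_ball m w H). pose proof (exf_bounds m). lra. Qed.

Lemma wall_map_contract m w w' e : in_ball m rad w -> in_ball m rad w' -> 0 <= e ->
  wclose m e w w' -> wclose (S m) (contr * e) (wall_map m w) (wall_map m w').
Proof.
  intros Hw Hw' He Hd i Hi.
  pose proof (exit_var_lt m) as Hc.
  pose proof (exit_factor_in_ball m w Hw) as [I1 _].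
  pose proof (exit_factor_in_ball m w' Hw') as [I2 _].
  pose proof (exf_bounds m) as [I3 _].
  unfold wall_map, exit_factor in *. rewrite !phi_eq_tab in * by assumption.
  apply rescale_diff_bound with (L := exf_lo m) (yi := wt m i) (yc := wt m (exit_var m))
    (M := Rabs (apx m i - focal_tab m i) + rad * wt m i); try assumption; try lra.
  - rewrite <- phi_eq_tab by exact Hc. apply phi_exit_ne_half.
  - apply Hd; exact Hi.
  - apply Hd; exact Hc.
  - replace (w' i - focal_tab m i) with ((w' i - apx m i) + (apx m i - focal_tab m i)) by ring.
    eapply Rle_trans; [apply Rabs_triang|]. pose proof (Hw' i Hi). lra.
  - left; apply wt_pos; exact Hc.
  - apply cert_contraction; exact Hi.
Qed.

Lemma wall_map_in_ball m r w : rad / 2 <= r <= rad -> in_ball m r w -> in_ball (S m) r (wall_map m w).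
Proof.
  intros Hr Hw i Hi. pose proof rad_pos.
  assert (HwR : in_ball m rad w) by (apply (in_ball_weaken m r); [lra|exact Hw]).
  assert (L := wall_map_contract m w (fun j => apx m j) r HwR ltac:(apply apx_in_ball; lra)
                 ltac:(lra) Hw i Hi).
  pose proof (cert_invariance m i Hi) as N.
  assert (E : wall_map m (fun j => apx m j) i =
     focal_tab m i + (apx m i - focal_tab m i)
       / ((focal_tab m (exit_var m) - apx m (exit_var m)) / (focal_tab m (exit_var m) - 1/2))).
  { unfold wall_map, exit_factor. rewrite !phi_eq_tab by (auto using exit_var_lt). reflexivity. }
  rewrite <- E in N.
  replace (wall_map m w i - apx (S m) i) with
    ((wall_map m w i - wall_map m (fun j => apx m j) i) + (wall_map m (fun j => apx m j) i - apx (S m) i))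
    by ring.
  eapply Rle_trans; [apply Rabs_triang|].
  pose proof (wt_pos (S m) i Hi). unfold contr in *.
  assert ((1 - 4/5) * (rad / 2) * wt (S m) i <= (1 - 4/5) * r * wt (S m) i).
  { apply Rmult_le_compat_r; [lra|]. apply Rmult_le_compat_l; lra. }
  nra.
Qed.

Lemma in_box_of_sides b v : (forall j, (j < 10)%nat -> on_side b j (v j)) -> in_box b v.
Proof.
  intros H j Hj. specialize (H j Hj). unfold on_side in H.
  destruct (b j); split; try split; intros; try lra; try discriminate.
Qed.

Lemma sides_of_in_box b v : in_box b v -> forall j, (j < 10)%nat -> on_side b j (v j).
Proof.
  intros H j Hj. destruct (H j Hj) as [H1 H2]. unfold on_side.
  destruct (b j).
  - destruct (Rlt_dec (1/2) (v j)); [auto|]. exfalso.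
    assert (Ht : true = true) by reflexivity. apply H2 in Ht. contradiction.
  - destruct (Rlt_dec (1/2) (v j)) as [r|r].
    + apply H2 in r. discriminate.
    + lra.
Qed.

Lemma in_box_ext b v w : (forall j, (j < 10)%nat -> v j = w j) -> in_box b v -> in_box b w.
Proof. intros E H j Hj. rewrite <- E by exact Hj. apply H; exact Hj. Qed.

Lemma on_side_cl_of_on_side b j x : on_side b j x -> on_side_cl b j x.
Proof. unfold on_side, on_side_cl. destruct (b j); lra. Qed.

Lemma on_side_between b j x1 x2 x : on_side b j x1 -> on_side b j x2 -> lies_between x1 x2 x -> on_side b j x.
Proof. unfold on_side, lies_between. destruct (b j); intros; lra. Qed.

Lemma on_side_near_apx m j x : (j < 10)%nat -> j <> entry_var m ->
  Rabs (x - apx m j) <= 1/10 -> on_side (box_of m) j x.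
Proof.
  intros Hj Hne Hx. pose proof (apx_margin m j Hj Hne). apply Rabs_le_iff in Hx.
  unfold on_side. destruct (box_of m j); lra.
Qed.

Lemma on_side_of_in_ball m r w j : r <= rad -> in_ball m r w -> (j < 10)%nat -> j <> entry_var m ->
  on_side (box_of m) j (w j).
Proof.
  intros Hr H Hj Hne. apply on_side_near_apx; try assumption.
  pose proof (H j Hj). pose proof (wt_bounds m j Hj). pose proof rad_pos. unfold rad in *.
  eapply Rle_trans; [eassumption|]. nra.
Qed.

Lemma on_side_of_S m j x : (j < 10)%nat -> j <> exit_var m ->
  on_side (box_of (S m)) j x -> on_side (box_of m) j x.
Proof.
  intros Hj Hne. unfold on_side. rewrite (box_of_S m j Hj).
  replace (Nat.eqb j (exit_var m)) with false by (symmetry; apply Nat.eqb_neq; exact Hne). auto.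
Qed.

(* Between the starting state and its image on the exit wall, every coordinate is a
   convex combination of the two, so it stays on the same side as both of them. *)
Lemma flow_in_box m w : 1 < exit_factor m w ->
  (forall j, (j < 10)%nat -> j <> exit_var m -> on_side_cl (box_of m) j (w j)) ->
  (forall j, (j < 10)%nat -> j <> exit_var m -> on_side (box_of m) j (wall_map m w j)) ->
  on_side (box_of m) (exit_var m) (w (exit_var m)) ->
  forall u, 0 < u < ln (exit_factor m w) -> in_box (box_of m) (flow m w u).
Proof.
  intros Hio Hw HP Hc u Hu. apply in_box_of_sides. intros j Hj.
  set (i := exit_factor m w) in *.
  assert (He1 : exp (- u) < 1) by (apply exp_neg_lt_1; lra).
  assert (He2 : / i < exp (- u)).
  { replace (/ i) with (exp (- ln i)) by (rewrite exp_Ropp, exp_ln; lra).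
    apply exp_increasing. lra. }
  assert (Hi0 : 0 < / i) by (apply Rinv_0_lt_compat; lra).
  assert (Hi1 : / i < 1) by (rewrite <- Rinv_1; apply Rinv_lt_contravar; lra).
  destruct (Nat.eq_dec j (exit_var m)) as [->|Hne].
  - assert (Hd := phi_exit_ne_half m).
    assert (Ew : w (exit_var m) - 1/2 = (phi m (exit_var m) - 1/2) * (1 - i))
      by (unfold i, exit_factor; field; lra).
    assert (Ef : flow m w u (exit_var m) - 1/2 = (phi m (exit_var m) - 1/2) * (1 - i * exp (-u)))
      by (unfold flow, i, exit_factor; field; lra).
    set (D := phi m (exit_var m) - 1/2) in *.
    assert (Hie : 1 < i * exp (- u)).
    { apply (Rmult_lt_compat_l i) in He2; [|lra]. rewrite Rinv_r in He2; lra. }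
    unfold on_side in *. destruct (box_of m (exit_var m)).
    + assert (D < 0) by nra. nra.
    + assert (D > 0) by nra. nra.
  - specialize (Hw j Hj Hne). specialize (HP j Hj Hne).
    set (lam := (exp (- u) - / i) / (1 - / i)).
    assert (Hl0 : 0 < lam) by (unfold lam; apply Rdiv_lt_0_compat; lra).
    assert (Hl1 : lam < 1).
    { unfold lam. apply (Rmult_lt_reg_r (1 - / i)); [lra|].
      unfold Rdiv; rewrite Rmult_assoc, Rinv_l by lra; lra. }
    assert (E : flow m w u j - 1/2 = (1 - lam) * (wall_map m w j - 1/2) + lam * (w j - 1/2)).
    { unfold lam, flow, wall_map. fold i. field. split; lra. }
    unfold on_side, on_side_cl in *. destruct (box_of m j); nra.
Qed.

Definition box_flow (b : box) (q : state) (u : R) : state :=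
  fun j => foc b j + (q j - foc b j) * exp (- u).

Lemma box_flow_0 b q j : box_flow b q 0 j = q j.
Proof. unfold box_flow. rewrite Ropp_0, exp_0. ring. Qed.

Lemma box_flow_add b q u v j : box_flow b (box_flow b q u) v j = box_flow b q (u + v) j.
Proof. unfold box_flow. rewrite Ropp_plus_distr, exp_plus. ring. Qed.

Definition enters_box (b : box) (q : state) : Prop :=
  forall j, (j < 10)%nat -> on_side b j (q j) \/
    (q j = 1/2 /\ on_side b j (foc b j) /\
     forall i, (i < 10)%nat -> i <> j -> on_side b i (q i)).

Lemma enters_box_ext b q r : (forall j, (j < 10)%nat -> r j = q j) -> enters_box b q -> enters_box b r.
Proof.
  intros E H j Hj. rewrite E by exact Hj.
  destruct (H j Hj) as [A|[A1 [A2 A3]]]; [left; exact A|right].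
  split; [exact A1|split; [exact A2|]]. intros i Hi Hne. rewrite E by exact Hi. apply A3; assumption.
Qed.

Lemma enters_box_flow b q sg u : enters_box b q ->
  (forall u, 0 < u < sg -> in_box b (box_flow b q u)) -> 0 <= u < sg ->
  enters_box b (box_flow b q u).
Proof.
  intros Hen Hin Hu. destruct (Req_dec u 0) as [->|Hne].
  - apply (enters_box_ext b q); [intros j _; apply box_flow_0|exact Hen].
  - intros j Hj. left. apply sides_of_in_box; [apply Hin; lra|exact Hj].
Qed.

Lemma focal_indep_own_bit b b' j : (j < 10)%nat ->
  (forall i, (i < 10)%nat -> i <> j -> b' i = b i) -> foc b' j = foc b j.
Proof.
  intros Hj H. case_lt10 Hj;
  cbv [focal Nat.modulo Nat.divmod fst snd Nat.sub Nat.add Nat.mul Nat.div Nat.even];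
  repeat rewrite H by lia; reflexivity.
Qed.

Lemma bit_eq_of_sides b b' j x y : on_side b j x -> on_side b' j y ->
  (x - 1/2) * (y - 1/2) > 0 -> b' j = b j.
Proof. unfold on_side. destruct (b j), (b' j); auto; intros; nra. Qed.

(* A coordinate strictly off its threshold keeps its side for a short time, so the
   box visited right after [r] agrees with [b] there. *)
Lemma bit_eq_of_strict_side b b' r g j : 0 < g -> (j < 10)%nat ->
  (forall u, 0 < u < g -> in_box b' (box_flow b' r u)) -> on_side b j (r j) -> b' j = b j.
Proof.
  intros Hg Hj Hbox Hs.
  set (x := r j) in *. set (F' := foc b' j).
  assert (Hd : 0 < Rabs (x - 1/2)).
  { apply Rabs_pos_lt. unfold on_side in Hs. destruct (b j); lra. }
  set (d := Rabs (x - 1/2)) in *.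
  pose proof (Rabs_pos (x - F')).
  set (u := Rmin (g / 2) (d / (2 * (Rabs (x - F') + 1)))).
  assert (Hu0 : 0 < u) by (unfold u; apply Rmin_glb_lt; [lra|apply Rdiv_lt_0_compat; lra]).
  assert (Hu1 : u < g) by (unfold u; pose proof (Rmin_l (g/2) (d / (2 * (Rabs (x - F') + 1)))); lra).
  assert (Hu2 : u * (2 * (Rabs (x - F') + 1)) <= d).
  { unfold u. pose proof (Rmin_r (g/2) (d / (2 * (Rabs (x - F') + 1)))) as H0.
    apply (Rmult_le_compat_r (2 * (Rabs (x - F') + 1))) in H0; [|lra].
    unfold Rdiv in H0. rewrite Rmult_assoc, Rinv_l in H0 by lra. lra. }
  pose proof (sides_of_in_box _ _ (Hbox u (conj Hu0 Hu1)) j Hj) as Hs'.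
  unfold box_flow in Hs'. fold F' x in Hs'.
  apply (bit_eq_of_sides b b' j x _ Hs Hs').
  pose proof (one_minus_exp_neg_bounds u (Rlt_le _ _ Hu0)) as [E1 E2].
  set (y := F' + (x - F') * exp (- u)).
  assert (Hyx : Rabs (y - x) <= Rabs (x - F') * u).
  { unfold y. replace (F' + (x - F') * exp (- u) - x) with (- ((x - F') * (1 - exp (- u)))) by ring.
    rewrite Rabs_Ropp, Rabs_mult, (Rabs_pos_eq (1 - exp (- u))) by lra.
    apply Rmult_le_compat_l; lra. }
  assert (Hlt : Rabs (y - x) < d) by nra.
  unfold d in *. apply Rabs_def2 in Hlt as [Hl1 Hl2].
  destruct (Rle_dec 0 (x - 1/2)).
  - rewrite (Rabs_pos_eq (x - 1/2)) in * by lra. apply Rmult_lt_0_compat; lra.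
  - rewrite (Rabs_left (x - 1/2)) in * by lra.
    replace ((x - 1/2) * (y - 1/2)) with ((1/2 - x) * (1/2 - y)) by ring.
    apply Rmult_lt_0_compat; lra.
Qed.

(* A coordinate on its threshold leaves it towards its focal value, which by
   [focal_indep_own_bit] is already the focal value of [b]. *)
Lemma box_eq_of_entering b b' r g : 0 < g ->
  (forall u, 0 < u < g -> in_box b' (box_flow b' r u)) ->
  enters_box b r -> forall j, (j < 10)%nat -> b' j = b j.
Proof.
  intros Hg Hbox Hen j Hj. destruct (Hen j Hj) as [Hs|[Hq [HF Ho]]].
  - exact (bit_eq_of_strict_side b b' r g j Hg Hj Hbox Hs).
  - assert (Hf : foc b' j = foc b j).
    { apply focal_indep_own_bit; [exact Hj|]. intros i Hi Hne.
      exact (bit_eq_of_strict_side b b' r g i Hg Hi Hbox (Ho i Hi Hne)). }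
    pose proof (sides_of_in_box _ _ (Hbox (g/2) ltac:(lra)) j Hj) as Hs'.
    unfold box_flow in Hs'. rewrite Hf, Hq in Hs'.
    apply (bit_eq_of_sides b b' j (foc b j) _ HF Hs').
    pose proof (exp_neg_lt_1 (g/2) ltac:(lra)).
    replace (foc b j + (1/2 - foc b j) * exp (- (g/2)) - 1/2)
      with ((foc b j - 1/2) * (1 - exp (- (g/2)))) by ring.
    assert (0 < (foc b j - 1/2) * (foc b j - 1/2)).
    { assert (foc b j - 1/2 <> 0) by (unfold on_side in HF; destruct (b j); lra). nra. }
    nra.
Qed.

Lemma focal_eq_of_box_eq b b' : (forall i, (i < 10)%nat -> b' i = b i) ->
  forall j, (j < 10)%nat -> foc b' j = foc b j.
Proof. intros H j Hj. apply focal_indep_own_bit; [exact Hj|]. intros i Hi _. apply H, Hi. Qed.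

Definition follows_piece (h : R -> state) (t0 t1 : R) (b : box) : Prop :=
  (forall t, t0 <= t <= t1 -> forall j, (j < 10)%nat -> h t j = box_flow b (h t0) (t - t0) j) /\
  (forall t, t0 < t < t1 -> in_box b (h t)).

Lemma traj_pieces_piece h n ts bs T k : traj_pieces kappa1 kappa2 h n ts bs T -> (k < n)%nat ->
  ts k < ts (S k) /\ follows_piece h (ts k) (ts (S k)) (bs k).
Proof.
  intros [_ [_ [Hinc Hpc]]] Hk. split; [apply Hinc, Hk|]. split.
  - intros t Ht. exact (proj1 (Hpc k Hk t Ht)).
  - intros t Ht. apply (Hpc k Hk t ltac:(lra)). exact Ht.
Qed.

Lemma piece_from_entering h t0 t1 b' b : t0 < t1 -> follows_piece h t0 t1 b' ->
  enters_box b (h t0) ->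
  forall t, t0 <= t <= t1 -> forall j, (j < 10)%nat -> h t j = box_flow b (h t0) (t - t0) j.
Proof.
  intros Ht01 [Hf Hb] Hen t Ht j Hj.
  assert (Hbits : forall i, (i < 10)%nat -> b' i = b i).
  { apply (box_eq_of_entering b b' (h t0) (t1 - t0)); [lra| |exact Hen].
    intros u Hu. apply (in_box_ext _ (h (t0 + u))); [|apply Hb; lra].
    intros i Hi. rewrite Hf by (lra || exact Hi). f_equal. ring. }
  rewrite Hf by assumption. unfold box_flow. rewrite (focal_eq_of_box_eq b b' Hbits j Hj). reflexivity.
Qed.

Lemma piece_from_inside h t0 t1 b' b s : follows_piece h t0 t1 b' -> t0 < s < t1 ->
  enters_box b (h s) ->
  forall t, s <= t <= t1 -> forall j, (j < 10)%nat -> h t j = box_flow b (h s) (t - s) j.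
Proof.
  intros [Hf Hb] Hs Hen t Ht j Hj.
  assert (Hbq : in_box b' (h s)) by (apply Hb; lra).
  assert (Hbits : forall i, (i < 10)%nat -> b' i = b i).
  { intros i Hi. destruct (Hbq i Hi) as [Hne _].
    destruct (Hen i Hi) as [Hs0|[Hq0 _]]; [|contradiction].
    apply (bit_eq_of_sides b b' i (h s i) (h s i) Hs0 (sides_of_in_box _ _ Hbq i Hi)).
    assert (h s i - 1/2 <> 0) by lra. nra. }
  assert (Hsf : forall i, (i < 10)%nat -> h s i = box_flow b' (h t0) (s - t0) i)
    by (intros i Hi; apply Hf; [lra|exact Hi]).
  rewrite Hf by (lra || exact Hj).
  replace (t - t0) with ((s - t0) + (t - s)) by ring. rewrite <- box_flow_add.
  unfold box_flow at 1 3. rewrite Hsf by exact Hj.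
  rewrite (focal_eq_of_box_eq b b' Hbits j Hj). reflexivity.
Qed.

Lemma solution_follows_box_flow h n ts bs T s b q sg :
  traj_pieces kappa1 kappa2 h n ts bs T -> 0 <= s -> 0 < sg ->
  (forall j, (j < 10)%nat -> h s j = q j) -> enters_box b q ->
  (forall u, 0 < u < sg -> in_box b (box_flow b q u)) ->
  forall t, s <= t <= T -> t <= s + sg ->
  forall j, (j < 10)%nat -> h t j = box_flow b q (t - s) j.
Proof.
  intros Htr Hs Hsg Hq Hen Hin.
  pose proof (fun k => traj_pieces_piece h n ts bs T k Htr) as Hpiece.
  destruct Htr as [H0 [Hn _]].
  assert (Cl : forall m, (m <= n)%nat -> forall t, s <= t <= ts m -> t <= s + sg ->
     forall j, (j < 10)%nat -> h t j = box_flow b q (t - s) j).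
  { induction m as [|m IH]; intros Hm t Ht Hts j Hj.
    - rewrite H0 in Ht. replace t with s by lra. rewrite Rminus_diag, box_flow_0. apply Hq, Hj.
    - destruct (Rle_dec t (ts m)) as [Hle|Hgt]; [apply IH; lia || lra|].
      destruct (Req_dec t s) as [->|Hts'].
      { rewrite Rminus_diag, box_flow_0. apply Hq, Hj. }
      destruct (Hpiece m ltac:(lia)) as [Hlt Hp].
      destruct (Rle_dec s (ts m)) as [Hsm|Hsm].
      + assert (Hr : forall i, (i < 10)%nat -> h (ts m) i = box_flow b q (ts m - s) i)
          by (intros i Hi; apply IH; lia || lra).
        assert (Hent : enters_box b (h (ts m))).
        { apply (enters_box_ext b (box_flow b q (ts m - s))); [exact Hr|].
          apply (enters_box_flow b q sg); [exact Hen|exact Hin|lra]. }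
        rewrite (piece_from_entering h (ts m) (ts (S m)) (bs m) b Hlt Hp Hent t ltac:(lra) j Hj).
        replace (t - s) with ((ts m - s) + (t - ts m)) by ring. rewrite <- box_flow_add.
        unfold box_flow at 1 2. rewrite Hr by exact Hj. reflexivity.
      + rewrite (piece_from_inside h (ts m) (ts (S m)) (bs m) b s Hp ltac:(lra)
                   ltac:(apply (enters_box_ext b q); assumption) t ltac:(lra) j Hj).
        unfold box_flow. rewrite Hq by exact Hj. reflexivity. }
  intros t Ht Hts j Hj. apply (Cl n (le_n n) t); [rewrite Hn; lra|lra|exact Hj].
Qed.

Fixpoint wall_seq (k0 : nat) (p : state) (n : nat) : state :=
  match n with O => p | S n' => wall_map (k0 + n') (wall_seq k0 p n') end.

Fixpoint wall_time (k0 : nat) (p : state) (n : nat) : R :=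
  match n with
  | O => 0
  | S n' => wall_time k0 p n' + ln (exit_factor (k0 + n') (wall_seq k0 p n'))
  end.

Lemma wall_seq_in_ball r w : rad / 2 <= r <= rad -> in_ball 0 r w ->
  forall n, in_ball n r (wall_seq 0 w n).
Proof.
  intros Hr H n. induction n as [|n IH]; [exact H|]. apply wall_map_in_ball; assumption.
Qed.

Lemma wall_seq_contract w w' e : in_ball 0 rad w -> in_ball 0 rad w' -> 0 <= e ->
  wclose 0 e w w' -> forall n, wclose n (contr ^ n * e) (wall_seq 0 w n) (wall_seq 0 w' n).
Proof.
  intros Hw Hw' He Hd n. pose proof rad_pos. pose proof contr_bounds.
  induction n as [|n IH]; simpl.
  - rewrite Rmult_1_l. exact Hd.
  - rewrite Rmult_assoc. apply wall_map_contract; [apply wall_seq_in_ball; [lra|assumption]..| |exact IH].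
    apply Rmult_le_pos; [apply pow_le; lra|exact He].
Qed.

Fixpoint picard (n : nat) : state :=
  match n with O => fun j => apx 0 j | S n' => wall_seq 0 (picard n') 10 end.

Lemma picard_in_ball n : in_ball 0 (rad / 2) (picard n).
Proof.
  pose proof rad_pos. induction n as [|n IH]; simpl.
  - apply apx_in_ball. lra.
  - apply (wall_seq_in_ball (rad/2) (picard n) ltac:(lra) IH 10).
Qed.

Lemma picard_step n : wclose 0 ((contr ^ 10) ^ n * rad) (picard n) (picard (S n)).
Proof.
  pose proof rad_pos. pose proof contr_bounds.
  induction n as [|n IH].
  - rewrite pow_O, Rmult_1_l. replace rad with (2 * (rad / 2)) by field.
    apply wclose_of_in_ball; apply picard_in_ball.
  - assert (Hc := wall_seq_contract (picard n) (picard (S n)) ((contr ^ 10) ^ n * rad)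
      (in_ball_weaken 0 (rad/2) rad _ ltac:(lra) (picard_in_ball n))
      (in_ball_weaken 0 (rad/2) rad _ ltac:(lra) (picard_in_ball (S n)))
      ltac:(apply Rmult_le_pos; [apply pow_le, pow_le; lra|lra]) IH 10).
    intros j Hj. specialize (Hc j Hj). change (wt 10 j) with (wt 0 j) in Hc.
    rewrite <- Rmult_assoc in Hc. change ((contr ^ 10) ^ S n) with (contr ^ 10 * (contr ^ 10) ^ n). exact Hc.
Qed.

Lemma picard_cauchy_bound n k j : (j < 10)%nat ->
  Rabs (picard n j - picard (n + k) j) <= rad * (contr ^ 10) ^ n * (1 - (contr ^ 10) ^ k) / (1 - contr ^ 10).
Proof.
  intros Hj. set (q := contr ^ 10). assert (Hq : 0 < q < 1) by (unfold q, contr; simpl; lra).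
  pose proof rad_pos. induction k as [|k IH].
  - rewrite Nat.add_0_r, Rminus_diag, Rabs_R0, pow_O, Rminus_diag. unfold Rdiv. lra.
  - replace (picard n j - picard (n + S k) j)
      with ((picard n j - picard (n + k) j) + (picard (n + k) j - picard (S (n + k)) j))
      by (rewrite Nat.add_succ_r; ring).
    eapply Rle_trans; [apply Rabs_triang|].
    pose proof (picard_step (n + k) j Hj) as H1. fold q in H1.
    pose proof (wt_bounds 0 j Hj) as [_ HY].
    assert (H2 : q ^ (n + k) * rad * wt 0 j <= q ^ (n + k) * rad).
    { pose proof (pow_le q (n+k) ltac:(lra)).
      rewrite <- (Rmult_1_r (q ^ (n+k) * rad)) at 2. apply Rmult_le_compat_l; [apply Rmult_le_pos|]; lra. }
    rewrite pow_add in H1, H2.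
    assert (E : rad * q ^ n * (1 - q ^ k) / (1 - q) + q ^ n * q ^ k * rad =
                rad * q ^ n * (1 - q ^ S k) / (1 - q)) by (simpl; field; lra).
    lra.
Qed.

Lemma picard_cauchy j : (j < 10)%nat -> Cauchy_crit (fun n => picard n j).
Proof.
  intros Hj eps Heps. set (q := contr ^ 10). assert (Hq : 0 < q < 1) by (unfold q, contr; simpl; lra).
  pose proof rad_pos.
  destruct (pow_lt_1_zero q ltac:(rewrite Rabs_pos_eq; lra) (eps * (1 - q) / (2 * rad))
     ltac:(apply Rdiv_lt_0_compat; nra)) as [N HN].
  assert (Hb : forall n k, (N <= n)%nat -> Rabs (picard n j - picard (n + k) j) < eps).
  { intros n k Hn. eapply Rle_lt_trans; [apply picard_cauchy_bound; exact Hj|]. fold q.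
    specialize (HN n Hn). rewrite Rabs_pos_eq in HN by (apply pow_le; lra).
    pose proof (pow_le q k ltac:(lra)). pose proof (pow_le q n ltac:(lra)).
    apply (Rmult_lt_compat_l (2 * rad)) in HN; [|lra].
    replace (2 * rad * (eps * (1 - q) / (2 * rad))) with (eps * (1 - q)) in HN by (field; lra).
    apply (Rmult_lt_reg_r (1 - q)); [lra|].
    replace (rad * q ^ n * (1 - q ^ k) / (1 - q) * (1 - q)) with (rad * q ^ n * (1 - q ^ k))
      by (field; lra).
    assert (0 <= rad * q ^ n) by (apply Rmult_le_pos; lra). nra. }
  exists N. intros n m Hn Hm. unfold R_dist.
  destruct (Nat.le_ge_cases n m) as [Hnm|Hnm].
  - replace m with (n + (m - n))%nat by lia. apply Hb; exact Hn.
  - replace n with (m + (n - m))%nat by lia. rewrite <- Rabs_Ropp, Ropp_minus_distr.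
    apply Hb; exact Hm.
Qed.

Definition fixed_pt : state := fun j =>
  match lt_dec j 10 with
  | left H => proj1_sig (R_complete _ (picard_cauchy j H))
  | right _ => 0
  end.

Lemma picard_cv j : (j < 10)%nat -> Un_cv (fun n => picard n j) (fixed_pt j).
Proof.
  intros Hj. unfold fixed_pt. destruct (lt_dec j 10) as [H|H]; [|lia].
  destruct (R_complete _ (picard_cauchy j H)) as [l Hl]. exact Hl.
Qed.

Lemma fixed_pt_in_ball : in_ball 0 (rad / 2) fixed_pt.
Proof.
  intros j Hj. apply Rabs_le_iff.
  cut (apx 0 j - rad / 2 * wt 0 j <= fixed_pt j <= apx 0 j + rad / 2 * wt 0 j); [lra|].
  apply (Un_cv_bounds (fun n => picard n j)); [apply picard_cv, Hj|].
  intros n. pose proof (picard_in_ball n j Hj) as X. apply Rabs_le_iff in X. lra.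
Qed.

Lemma fixed_pt_fixed j : (j < 10)%nat -> wall_seq 0 fixed_pt 10 j = fixed_pt j.
Proof.
  intros Hj. apply eq_of_forall_abs_le. intros e He. pose proof rad_pos.
  destruct (eventually_forall_lt (fun j n => Rabs (picard n j - fixed_pt j) < e / 400) 10) as [N HN].
  { intros j0 Hj0. destruct (picard_cv j0 Hj0 (e / 400) ltac:(lra)) as [N HN]. exists N.
    intros n Hn. apply HN. lia. }
  assert (Hd : wclose 0 (e / 2) fixed_pt (picard N)).
  { intros j0 Hj0. specialize (HN N (le_n N) j0 Hj0). rewrite <- Rabs_Ropp, Ropp_minus_distr.
    pose proof (wt_bounds 0 j0 Hj0). nra. }
  assert (L := wall_seq_contract fixed_pt (picard N) (e / 2)
     (in_ball_weaken 0 (rad/2) rad _ ltac:(lra) fixed_pt_in_ball)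
     (in_ball_weaken 0 (rad/2) rad _ ltac:(lra) (picard_in_ball N)) ltac:(lra) Hd 10 j Hj).
  change (wall_seq 0 (picard N) 10) with (picard (S N)) in L. change (wt 10 j) with (wt 0 j) in L.
  pose proof (HN (S N) ltac:(lia) j Hj).
  pose proof (wt_bounds 0 j Hj). pose proof (contr_pow_bounds 10).
  assert (contr ^ 10 * (e / 2) * wt 0 j <= e / 2).
  { apply Rle_trans with (1 * (e/2) * 1); [|lra]. apply Rmult_le_compat; nra. }
  replace (wall_seq 0 fixed_pt 10 j - fixed_pt j)
    with ((wall_seq 0 fixed_pt 10 j - picard (S N) j) + (picard (S N) j - fixed_pt j)) by ring.
  eapply Rle_trans; [apply Rabs_triang|]. lra.
Qed.

Definition orbit_pt (k : nat) : state := wall_seq 0 fixed_pt k.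
Definition transit (k : nat) : R := ln (exit_factor k (orbit_pt k)).
Definition period : R := wall_time 0 fixed_pt 10.

Lemma phi_add10 m j : phi (m + 10) j = phi m j.
Proof. unfold phi. rewrite box_of_add10. reflexivity. Qed.

Lemma wall_map_add10 m w j : wall_map (m + 10) w j = wall_map m w j.
Proof. unfold wall_map, exit_factor. rewrite ?phi_add10, ?exit_var_add10. reflexivity. Qed.

Lemma orbit_pt_in_ball k : in_ball k (rad / 2) (orbit_pt k).
Proof. apply wall_seq_in_ball; [pose proof rad_pos; lra|exact fixed_pt_in_ball]. Qed.

Lemma orbit_pt_in_rad_ball k : in_ball k rad (orbit_pt k).
Proof. apply (in_ball_weaken k (rad / 2)); [pose proof rad_pos; lra|apply orbit_pt_in_ball]. Qed.

Lemma orbit_pt_add10 k j : (j < 10)%nat -> orbit_pt (k + 10) j = orbit_pt k j.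
Proof.
  revert j. induction k as [|k IH]; intros j Hj.
  - apply fixed_pt_fixed; exact Hj.
  - unfold orbit_pt in *. simpl. rewrite wall_map_add10. apply wall_map_ext; assumption.
Qed.

Lemma orbit_pt_mod k j : (j < 10)%nat -> orbit_pt k j = orbit_pt (k mod 10) j.
Proof.
  intros Hj. rewrite (Nat.div_mod_eq k 10) at 1.
  generalize (k / 10)%nat. intros q. induction q as [|q IH].
  - rewrite Nat.mul_0_r, Nat.add_0_l. reflexivity.
  - replace (10 * S q + k mod 10)%nat with ((10 * q + k mod 10) + 10)%nat by lia.
    rewrite orbit_pt_add10 by exact Hj. exact IH.
Qed.

Lemma orbit_pt_exit_factor k : 1 < exit_factor k (orbit_pt k).
Proof. apply exit_factor_in_ball_gt_1, orbit_pt_in_rad_ball. Qed.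

Lemma orbit_pt_S k j : orbit_pt (S k) j = flow k (orbit_pt k) (transit k) j.
Proof. symmetry. apply flow_exit_time. pose proof (orbit_pt_exit_factor k). lra. Qed.

Lemma orbit_pt_entry_wall k : orbit_pt k (entry_var k) = 1/2.
Proof.
  assert (Hex : forall k, orbit_pt (S k) (exit_var k) = 1/2).
  { intros k0. change (orbit_pt (S k0)) with (wall_map k0 (orbit_pt k0)).
    apply wall_map_exit. pose proof (orbit_pt_exit_factor k0). lra. }
  destruct k as [|k].
  - rewrite <- orbit_pt_add10 by apply entry_var_lt.
    change (entry_var 0) with (entry_var (S 9)). rewrite entry_var_S. apply Hex.
  - rewrite entry_var_S. apply Hex.
Qed.

Lemma transit_pos k : 0 < transit k.
Proof. apply ln_pos_of_gt_1, orbit_pt_exit_factor. Qed.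

(* The invariant propagated from wall to wall by [tracks_step]: [p] follows, inside
   box [m], a state weighted-[e]-close to the orbit's crossing point. *)
Definition tracks (m : nat) (e : R) (p : state) : Prop :=
  0 <= e <= rad / 2 /\
  (exists w s, wclose m e w (orbit_pt m) /\ 0 <= s <= transit m /\
     forall j, (j < 10)%nat -> p j = flow m w s j) /\
  on_side_cl (box_of m) (entry_var m) (p (entry_var m)) /\
  on_side (box_of m) (exit_var m) (p (exit_var m)).

Lemma wclose_orbit_in_ball m e w : 0 <= e <= rad / 2 -> wclose m e w (orbit_pt m) -> in_ball m rad w.
Proof.
  intros He H j Hj. pose proof (H j Hj). pose proof (orbit_pt_in_ball m j Hj). pose proof (wt_pos m j Hj).
  replace (w j - apx m j) with ((w j - orbit_pt m j) + (orbit_pt m j - apx m j)) by ring.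
  eapply Rle_trans; [apply Rabs_triang|]. nra.
Qed.

Lemma flow_wclose m e v w u : 0 <= u -> wclose m e v w -> wclose m e (flow m v u) (flow m w u).
Proof.
  intros Hu H j Hj. unfold flow.
  replace (phi m j + (v j - phi m j) * exp (- u) - (phi m j + (w j - phi m j) * exp (- u)))
    with ((v j - w j) * exp (- u)) by ring.
  rewrite Rabs_mult, (Rabs_pos_eq (exp _)) by (left; apply exp_pos).
  pose proof (exp_neg_le_1 u Hu). pose proof (exp_pos (- u)). pose proof (H j Hj).
  pose proof (Rabs_pos (v j - w j)). nra.
Qed.

Lemma wclose_abs_le m e v w : 0 <= e -> wclose m e v w -> forall j, (j < 10)%nat -> Rabs (v j - w j) <= e.
Proof. intros He H j Hj. pose proof (H j Hj). pose proof (wt_bounds m j Hj). nra. Qed.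

Lemma tracks_exit_factor_gt_1 m e p : tracks m e p -> 1 < exit_factor m p.
Proof. intros (_ & _ & _ & Hex). apply exit_factor_gt_1, Hex. Qed.

Lemma tracks_wall_map_close m e p : tracks m e p ->
  wclose (S m) (contr * e) (wall_map m p) (orbit_pt (S m)).
Proof.
  intros (He & (w & s & Hd & Hs & Hp) & _ & _).
  assert (Hw : in_ball m rad w) by (apply (wclose_orbit_in_ball m e); assumption).
  pose proof (exit_factor_in_ball_gt_1 m w Hw).
  intros j Hj. rewrite (wall_map_ext m p (flow m w s) Hp j Hj), wall_map_flow by lra.
  apply wall_map_contract; [exact Hw|apply orbit_pt_in_rad_ball|lra|exact Hd|exact Hj].
Qed.

Lemma tracks_other_sides m e p : tracks m e p ->
  forall j, (j < 10)%nat -> j <> entry_var m -> j <> exit_var m -> on_side (box_of m) j (p j).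
Proof.
  intros (He & (w & s & Hd & Hs & Hp) & _ & _) j Hj Hn1 Hn2.
  assert (Hw : in_ball m rad w) by (apply (wclose_orbit_in_ball m e); assumption).
  rewrite Hp by exact Hj.
  apply (on_side_between _ _ (flow m w 0 j) (flow m w (transit m) j)); [| |apply flow_between; lra].
  - rewrite flow_0. apply (on_side_of_in_ball m rad); auto; lra.
  - apply on_side_of_S; [exact Hj|exact Hn2|].
    apply on_side_near_apx; [exact Hj|rewrite entry_var_S; exact Hn2|].
    pose proof (flow_wclose m e w (orbit_pt m) (transit m) ltac:(pose proof (transit_pos m); lra) Hd j Hj).
    rewrite <- orbit_pt_S in H.
    pose proof (orbit_pt_in_ball (S m) j Hj). pose proof (wt_bounds m j Hj). pose proof (wt_bounds (S m) j Hj).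
    replace (flow m w (transit m) j - apx (S m) j)
      with ((flow m w (transit m) j - orbit_pt (S m) j) + (orbit_pt (S m) j - apx (S m) j)) by ring.
    eapply Rle_trans; [apply Rabs_triang|]. unfold rad in *. nra.
Qed.

Lemma tracks_step m e p : tracks m e p -> tracks (S m) (contr * e) (wall_map m p).
Proof.
  intros Htr. pose proof (tracks_exit_factor_gt_1 m e p Htr) as Hio.
  pose proof (tracks_wall_map_close m e p Htr) as Hcl.
  destruct Htr as (He & _ & _ & _). pose proof contr_bounds.
  assert (Hwall : wall_map m p (exit_var m) = 1/2) by (apply wall_map_exit; lra).
  split; [unfold contr in *; nra|]. split.
  { exists (wall_map m p), 0. split; [exact Hcl|]. split; [split; [lra|left; apply transit_pos]|].
    intros j _. rewrite flow_0. reflexivity. }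
  split.
  - rewrite entry_var_S, Hwall. unfold on_side_cl. destruct (box_of _ _); lra.
  - apply (on_side_of_in_ball _ rad); [lra| |apply exit_var_lt|].
    + apply (wclose_orbit_in_ball _ (contr * e)); [unfold contr in *; nra|exact Hcl].
    + apply not_eq_sym, entry_var_neq_exit_var.
Qed.

Lemma tracks_flow_in_box m e p : tracks m e p ->
  forall u, 0 < u < ln (exit_factor m p) -> in_box (box_of m) (flow m p u).
Proof.
  intros Htr. pose proof (tracks_step m e p Htr) as HS.
  pose proof (tracks_other_sides m e p Htr) as Hsides.
  pose proof (tracks_other_sides (S m) (contr * e) (wall_map m p) HS) as HsidesS.
  destruct Htr as (_ & _ & Hen & Hex).
  apply flow_in_box; [exact (exit_factor_gt_1 m p Hex)| | |exact Hex].
  - intros j Hj Hj'. destruct (Nat.eq_dec j (entry_var m)) as [->|Hn]; [exact Hen|].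
    apply on_side_cl_of_on_side, Hsides; assumption.
  - intros j Hj Hj'. apply on_side_of_S; [exact Hj|exact Hj'|].
    destruct (Nat.eq_dec j (exit_var (S m))) as [->|Hn'].
    + apply HS.
    + apply HsidesS; [exact Hj|rewrite entry_var_S; exact Hj'|exact Hn'].
Qed.

Lemma tracks_enters_box m e p : tracks m e p -> enters_box (box_of m) p.
Proof.
  intros Htr. pose proof (tracks_other_sides m e p Htr) as Hsides.
  destruct Htr as (_ & _ & Hen & Hex).
  assert (Hoth : forall i, (i < 10)%nat -> i <> entry_var m -> on_side (box_of m) i (p i)).
  { intros i Hi Hne. destruct (Nat.eq_dec i (exit_var m)) as [->|Hn']; [exact Hex|].
    apply Hsides; assumption. }
  intros j Hj. destruct (Nat.eq_dec j (entry_var m)) as [->|Hn]; [|left; apply Hoth; assumption].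
  destruct (Req_dec (p (entry_var m)) (1/2)) as [E|E].
  - right. split; [exact E|]. split; [|exact Hoth].
    change (foc (box_of m) (entry_var m)) with (phi m (entry_var m)).
    rewrite phi_eq_tab by exact Hj. apply focal_entry_side.
  - left. unfold on_side, on_side_cl in *. destruct (box_of m (entry_var m)); lra.
Qed.

(* Before the orbit's exit time the two flows are compared at equal times; afterwards
   the tracked point lies between two states both [e]-close to [orbit_pt (S m)]. *)
Lemma tracks_flow_near_orbit m e p : tracks m e p ->
  forall u, 0 <= u <= ln (exit_factor m p) -> exists t, 0 <= t <= transit m /\
    forall j, (j < 10)%nat -> Rabs (flow m p u j - flow m (orbit_pt m) t j) <= e.
Proof.
  intros Htr u Hu. pose proof (tracks_exit_factor_gt_1 m e p Htr) as Hio.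
  destruct Htr as (He & (w & s & Hd & Hs & Hp) & _ & _).
  assert (Hw : in_ball m rad w) by (apply (wclose_orbit_in_ball m e); assumption).
  assert (Hiow : 1 < exit_factor m w) by (apply exit_factor_in_ball_gt_1, Hw).
  assert (Hfl : forall j, (j < 10)%nat -> flow m p u j = flow m w (s + u) j).
  { intros j Hj. rewrite <- flow_add. unfold flow at 1. rewrite Hp by exact Hj. reflexivity. }
  assert (Hlen : ln (exit_factor m p) = ln (exit_factor m w) - s).
  { rewrite (exit_factor_ext m p (flow m w s)) by (apply Hp, exit_var_lt).
    rewrite exit_factor_flow, ln_mult, ln_exp by (try apply exp_pos; lra). ring. }
  destruct (Rle_dec (s + u) (transit m)) as [Hle|Hgt].
  - exists (s + u). split; [lra|]. intros j Hj. rewrite Hfl by exact Hj.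
    apply (wclose_abs_le m); [lra|apply flow_wclose; [lra|exact Hd]|exact Hj].
  - pose proof (transit_pos m). exists (transit m). split; [lra|]. intros j Hj.
    rewrite Hfl by exact Hj. rewrite <- orbit_pt_S.
    apply (abs_sub_between (flow m w (transit m) j) (flow m w (ln (exit_factor m w)) j)).
    + rewrite orbit_pt_S. apply (wclose_abs_le m); [lra|apply flow_wclose; [lra|exact Hd]|exact Hj].
    + rewrite flow_exit_time by lra. pose proof contr_bounds.
      apply (wclose_abs_le (S m)); [nra| |exact Hj]. intros i Hi.
      pose proof (wall_map_contract m w (orbit_pt m) e Hw (orbit_pt_in_rad_ball m) ltac:(lra) Hd i Hi).
      assert (contr * e * wt (S m) i <= e * wt (S m) i)
        by (apply Rmult_le_compat_r; [left; apply wt_pos, Hi|nra]).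
      change (orbit_pt (S m)) with (wall_map m (orbit_pt m)). lra.
    + apply flow_between. lra.
Qed.

Definition chain_index (k0 : nat) (p : state) (t : R) : nat :=
  epsilon (inhabits 0%nat) (fun n => wall_time k0 p n <= t < wall_time k0 p (S n)).

(* Coordinates [>= 10] play no role in the dynamics; they are frozen at [p]. *)
Definition chain_traj (k0 : nat) (p : state) (t : R) : state := fun j =>
  if Nat.ltb j 10 then
    flow (k0 + chain_index k0 p t) (wall_seq k0 p (chain_index k0 p t))
         (t - wall_time k0 p (chain_index k0 p t)) j
  else p j.

Section Chain.

Variables (k0 : nat) (e0 : R) (p : state).
Hypothesis Htr : tracks k0 e0 p.

Lemma tracks_wall_seq n : tracks (k0 + n) (contr ^ n * e0) (wall_seq k0 p n).
Proof.
  induction n as [|n IH].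
  - rewrite Nat.add_0_r, pow_O, Rmult_1_l. exact Htr.
  - replace (k0 + S n)%nat with (S (k0 + n)) by lia. simpl wall_seq.
    replace (contr ^ S n * e0) with (contr * (contr ^ n * e0)) by (simpl; ring).
    apply tracks_step, IH.
Qed.

Lemma wall_time_S n :
  wall_time k0 p (S n) = wall_time k0 p n + ln (exit_factor (k0 + n) (wall_seq k0 p n)).
Proof. reflexivity. Qed.

Lemma wall_time_step_pos n : 0 < ln (exit_factor (k0 + n) (wall_seq k0 p n)).
Proof. apply ln_pos_of_gt_1. exact (tracks_exit_factor_gt_1 _ _ _ (tracks_wall_seq n)). Qed.

Lemma wall_time_step_ge n : ln (7/5) <= ln (exit_factor (k0 + S n) (wall_seq k0 p (S n))).
Proof.
  pose proof (tracks_wall_seq n) as Hn. pose proof (tracks_wall_map_close _ _ _ Hn) as Hcl.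
  destruct Hn as (He & _). pose proof contr_bounds.
  replace (k0 + S n)%nat with (S (k0 + n)) by lia.
  assert (Hb : in_ball (S (k0 + n)) rad (wall_seq k0 p (S n)))
    by (apply (wclose_orbit_in_ball _ (contr * (contr ^ n * e0))); [nra|exact Hcl]).
  pose proof (exit_factor_in_ball _ _ Hb). pose proof (exf_bounds (S (k0 + n))).
  apply ln_le_mono; lra.
Qed.

Lemma wall_time_lt n : wall_time k0 p n < wall_time k0 p (S n).
Proof. rewrite wall_time_S. pose proof (wall_time_step_pos n). lra. Qed.

Lemma wall_time_le m n : (m <= n)%nat -> wall_time k0 p m <= wall_time k0 p n.
Proof. intros H. induction H as [|n H IH]; [lra|]. pose proof (wall_time_lt n). lra. Qed.

Lemma wall_time_ge n : INR n * ln (7/5) <= wall_time k0 p (S n).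
Proof.
  induction n as [|n IH].
  - simpl INR. rewrite Rmult_0_l. pose proof (wall_time_lt 0). simpl wall_time in *. lra.
  - rewrite S_INR, wall_time_S. pose proof (wall_time_step_ge n). lra.
Qed.

Lemma wall_time_cover n0 t : wall_time k0 p n0 <= t ->
  exists n, (n0 <= n)%nat /\ wall_time k0 p n <= t <= wall_time k0 p (S n).
Proof.
  intros Ht.
  assert (G : forall K, t <= wall_time k0 p (n0 + K) ->
            exists n, (n0 <= n)%nat /\ wall_time k0 p n <= t <= wall_time k0 p (S n)).
  { induction K as [|K IH]; intros HK.
    - exists n0. rewrite Nat.add_0_r in HK. pose proof (wall_time_lt n0). split; [lia|lra].
    - destruct (Rle_dec t (wall_time k0 p (n0 + K))) as [L|L]; [apply IH; exact L|].
      exists (n0 + K)%nat. rewrite Nat.add_succ_r in HK. split; [lia|lra]. }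
  assert (Hln : 0 < ln (7/5)) by (apply ln_pos_of_gt_1; lra).
  destruct (INR_unbounded (t / ln (7/5))) as [N HN].
  apply (G (S N)). rewrite Nat.add_succ_r.
  pose proof (wall_time_ge (n0 + N)) as H. rewrite plus_INR, Rmult_plus_distr_r in H.
  assert (0 <= INR n0 * ln (7/5)) by (apply Rmult_le_pos; [apply pos_INR|lra]).
  assert (t <= INR N * ln (7/5)).
  { apply (Rmult_le_reg_r (/ ln (7/5))); [apply Rinv_0_lt_compat, Hln|].
    rewrite Rmult_assoc, Rinv_r, Rmult_1_r by lra. unfold Rdiv in HN. lra. }
  lra.
Qed.


Lemma wall_seq_flow_end n j :
  flow (k0 + n) (wall_seq k0 p n) (ln (exit_factor (k0 + n) (wall_seq k0 p n))) j = wall_seq k0 p (S n) j.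
Proof.
  apply flow_exit_time. pose proof (tracks_exit_factor_gt_1 _ _ _ (tracks_wall_seq n)). lra.
Qed.

Lemma chain_traj_eq n t j : wall_time k0 p n <= t <= wall_time k0 p (S n) -> (j < 10)%nat ->
  chain_traj k0 p t j = flow (k0 + n) (wall_seq k0 p n) (t - wall_time k0 p n) j.
Proof.
  intros Ht Hj. unfold chain_traj. replace (Nat.ltb j 10) with true by (symmetry; apply Nat.ltb_lt, Hj).
  assert (Hex : exists n, wall_time k0 p n <= t < wall_time k0 p (S n)).
  { destruct (Rlt_dec t (wall_time k0 p (S n))) as [L|L]; [exists n; lra|].
    exists (S n). pose proof (wall_time_lt (S n)). lra. }
  pose proof (epsilon_spec (inhabits 0%nat) _ Hex) as Hs. fold (chain_index k0 p t) in Hs.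
  set (n' := chain_index k0 p t) in *.
  destruct (lt_eq_lt_dec n' n) as [[Hlt| ->]|Hgt]; [|reflexivity|].
  - exfalso. pose proof (wall_time_le (S n') n Hlt). lra.
  - destruct (Nat.eq_dec n' (S n)) as [E|Hne].
    + rewrite E in Hs |- *. replace t with (wall_time k0 p (S n)) by lra.
      rewrite Rminus_diag, flow_0, wall_time_S.
      replace (wall_time k0 p n + ln (exit_factor (k0 + n) (wall_seq k0 p n)) - wall_time k0 p n)
        with (ln (exit_factor (k0 + n) (wall_seq k0 p n))) by ring.
      symmetry. apply wall_seq_flow_end.
    + exfalso. pose proof (wall_time_le (S (S n)) n' ltac:(lia)). pose proof (wall_time_lt (S n)). lra.
Qed.

Lemma chain_traj_0 : chain_traj k0 p 0 = p.
Proof.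
  apply functional_extensionality. intros j. destruct (lt_dec j 10) as [Hj|Hj].
  - pose proof (wall_time_lt 0). rewrite (chain_traj_eq 0 0 j) by (simpl in *; lra || exact Hj).
    simpl wall_time. rewrite Rminus_0_r, flow_0. reflexivity.
  - unfold chain_traj. replace (Nat.ltb j 10) with false by (symmetry; apply Nat.ltb_ge; lia).
    reflexivity.
Qed.

Lemma chain_traj_pieces n T : wall_time k0 p n < T <= wall_time k0 p (S n) ->
  traj_pieces kappa1 kappa2 (chain_traj k0 p) (S n)
    (fun k => if Nat.leb k n then wall_time k0 p k else T) (fun k => box_of (k0 + k)) T.
Proof.
  intros HT.
  assert (Hts : forall k, (k < S n)%nat ->
            (if Nat.leb k n then wall_time k0 p k else T) = wall_time k0 p k /\
            wall_time k0 p k < (if Nat.leb (S k) n then wall_time k0 p (S k) else T) <= wall_time k0 p (S k)).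
  { intros k Hk. replace (Nat.leb k n) with true by (symmetry; apply Nat.leb_le; lia).
    split; [reflexivity|]. destruct (Nat.leb (S k) n) eqn:E.
    - pose proof (wall_time_lt k). lra.
    - apply Nat.leb_gt in E. replace k with n by lia. lra. }
  split; [reflexivity|]. split.
  { replace (Nat.leb (S n) n) with false by (symmetry; apply Nat.leb_gt; lia). reflexivity. }
  split; [intros k Hk; destruct (Hts k Hk) as [-> ?]; lra|].
  intros k Hk t Ht. destruct (Hts k Hk) as [E [Hlt Hle]]. rewrite E in *.
  assert (Ht' : wall_time k0 p k <= t <= wall_time k0 p (S k)) by lra.
  split.
  - intros j Hj. rewrite (chain_traj_eq k t j Ht' Hj).
    rewrite (chain_traj_eq k (wall_time k0 p k) j ltac:(lra) Hj), Rminus_diag, flow_0. reflexivity.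
  - intros Ho. apply (in_box_ext _ (flow (k0 + k) (wall_seq k0 p k) (t - wall_time k0 p k))).
    + intros j Hj. symmetry. apply (chain_traj_eq k t j Ht' Hj).
    + apply (tracks_flow_in_box _ _ _ (tracks_wall_seq k)). pose proof (wall_time_S k). lra.
Qed.

Lemma chain_traj_solution : solution kappa1 kappa2 (chain_traj k0 p).
Proof.
  intros T HT0.
  assert (Hn : exists n, wall_time k0 p n < T <= wall_time k0 p (S n)).
  { destruct (wall_time_cover 0 T ltac:(simpl; lra)) as [n [_ [H1 H2]]].
    destruct (Req_dec (wall_time k0 p n) T) as [E|E]; [|exists n; lra].
    destruct n as [|n]; [simpl in E; lra|]. exists n. pose proof (wall_time_lt n). lra. }
  destruct Hn as [n Hn]. eexists _, _, _. exact (chain_traj_pieces n T Hn).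
Qed.

End Chain.

Definition orbit : R -> state := chain_traj 0 fixed_pt.

Lemma tracks_orbit_start : tracks 0 0 fixed_pt.
Proof.
  pose proof rad_pos. split; [lra|]. split.
  { exists fixed_pt, 0. split; [intros j Hj; unfold Rminus; rewrite Rplus_opp_r, Rabs_R0; lra|].
    split; [split; [lra|left; apply transit_pos]|]. intros j _. rewrite flow_0. reflexivity. }
  split.
  - change fixed_pt with (orbit_pt 0). rewrite orbit_pt_entry_wall.
    unfold on_side_cl. destruct (box_of _ _); lra.
  - apply (on_side_of_in_ball 0 (rad / 2)); [lra|exact fixed_pt_in_ball|apply exit_var_lt|].
    apply not_eq_sym, entry_var_neq_exit_var.
Qed.

Lemma orbit_piece r t j :
  wall_time 0 fixed_pt r <= t <= wall_time 0 fixed_pt (S r) -> (j < 10)%nat ->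
  orbit t j = flow r (orbit_pt r) (t - wall_time 0 fixed_pt r) j.
Proof. apply (chain_traj_eq 0 0 fixed_pt tracks_orbit_start). Qed.

Lemma orbit_wall_time_le m n : (m <= n)%nat -> wall_time 0 fixed_pt m <= wall_time 0 fixed_pt n.
Proof. apply (wall_time_le 0 0 fixed_pt tracks_orbit_start). Qed.

Lemma period_pos : 0 < period.
Proof.
  pose proof (wall_time_lt 0 0 fixed_pt tracks_orbit_start 0).
  pose proof (orbit_wall_time_le 1 10 ltac:(lia)). unfold period. simpl wall_time in *. lra.
Qed.

Lemma orbit_periodic : orbit period = orbit 0.
Proof.
  unfold orbit. rewrite (chain_traj_0 0 0 fixed_pt tracks_orbit_start).
  apply functional_extensionality. intros j. destruct (lt_dec j 10) as [Hj|Hj].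
  - rewrite (chain_traj_eq 0 0 fixed_pt tracks_orbit_start 9 period j)
      by (unfold period; pose proof (wall_time_lt 0 0 fixed_pt tracks_orbit_start 9); lra || exact Hj).
    unfold period. rewrite (wall_time_S 0 fixed_pt 9).
    replace (wall_time 0 fixed_pt 9 + ln (exit_factor (0 + 9) (wall_seq 0 fixed_pt 9)) - wall_time 0 fixed_pt 9)
      with (ln (exit_factor (0 + 9) (wall_seq 0 fixed_pt 9))) by ring.
    rewrite (wall_seq_flow_end 0 0 fixed_pt tracks_orbit_start 9).
    apply (orbit_pt_add10 0 j Hj).
  - unfold chain_traj. replace (Nat.ltb j 10) with false by (symmetry; apply Nat.ltb_ge; lia).
    reflexivity.
Qed.

Lemma traj_pieces_boxes_ext k1 k2 g n ts bs bs' T : (forall k, (k < n)%nat -> bs k = bs' k) ->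
  traj_pieces k1 k2 g n ts bs T -> traj_pieces k1 k2 g n ts bs' T.
Proof.
  intros E (H0 & Hn & Hinc & Hpc). split; [exact H0|]. split; [exact Hn|]. split; [exact Hinc|].
  intros k Hk. rewrite <- (E k Hk). apply Hpc, Hk.
Qed.

Lemma orbit_traj_pieces : exists ts, traj_pieces kappa1 kappa2 orbit 10 ts cycle_box period.
Proof.
  eexists. apply (traj_pieces_boxes_ext _ _ _ _ _ (fun k => box_of (0 + k))).
  - intros k Hk. unfold box_of. change (0 + k)%nat with k. rewrite Nat.mod_small by exact Hk. reflexivity.
  - apply (chain_traj_pieces 0 0 fixed_pt tracks_orbit_start 9).
    pose proof (wall_time_lt 0 0 fixed_pt tracks_orbit_start 9). unfold period. lra.
Qed.

Lemma flow_orbit_mod m t j : (j < 10)%nat ->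
  flow m (orbit_pt m) t j = flow (m mod 10) (orbit_pt (m mod 10)) t j.
Proof.
  intros Hj. unfold flow, phi, box_of. rewrite Nat.Div0.mod_mod, (orbit_pt_mod m j Hj). reflexivity.
Qed.

Lemma transit_mod m : transit m = transit (m mod 10).
Proof.
  unfold transit, exit_factor, phi, exit_var, box_of. rewrite !Nat.Div0.mod_mod.
  rewrite (orbit_pt_mod m) by (pose proof (exit_var_lt m) as H; unfold exit_var in H; exact H).
  reflexivity.
Qed.

Lemma near_orbit_of_close m t' v e eps : 0 <= t' <= transit m ->
  (forall j, (j < 10)%nat -> Rabs (v j - flow m (orbit_pt m) t' j) <= e) -> e < eps ->
  near_orbit orbit period eps v.
Proof.
  intros Ht H He. set (r := (m mod 10)%nat).
  assert (Hr : (r < 10)%nat) by (apply Nat.mod_upper_bound; lia).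
  rewrite transit_mod in Ht. fold r in Ht.
  assert (Hw : wall_time 0 fixed_pt (S r) = wall_time 0 fixed_pt r + transit r) by reflexivity.
  exists (wall_time 0 fixed_pt r + t'). split.
  - pose proof (orbit_wall_time_le 0 r ltac:(lia)). pose proof (orbit_wall_time_le (S r) 10 Hr).
    unfold period. simpl wall_time in *. lra.
  - intros j Hj. rewrite (orbit_piece r) by (lra || exact Hj).
    replace (wall_time 0 fixed_pt r + t' - wall_time 0 fixed_pt r) with t' by ring.
    specialize (H j Hj). rewrite flow_orbit_mod in H by exact Hj. fold r in H. lra.
Qed.

Lemma near_orbit_ext g T eps v w : (forall j, (j < 10)%nat -> v j = w j) ->
  near_orbit g T eps w -> near_orbit g T eps v.
Proof.
  intros E [t [Ht H]]. exists t. split; [exact Ht|]. intros j Hj. rewrite E by exact Hj. apply H, Hj.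
Qed.

Lemma chain_traj_near_orbit k0 e0 p : tracks k0 e0 p ->
  forall n0 t eps, wall_time k0 p n0 <= t -> contr ^ n0 * e0 < eps ->
  near_orbit orbit period eps (chain_traj k0 p t).
Proof.
  intros Htr n0 t eps Ht He.
  destruct (wall_time_cover k0 e0 p Htr n0 t Ht) as [n [Hn Htn]].
  pose proof (tracks_wall_seq k0 e0 p Htr n) as Hn'.
  destruct (tracks_flow_near_orbit _ _ _ Hn' (t - wall_time k0 p n)) as [t' [Ht' Hclose]].
  { rewrite (wall_time_S k0 p n) in Htn. lra. }
  apply (near_orbit_ext _ _ _ _ (flow (k0 + n) (wall_seq k0 p n) (t - wall_time k0 p n))).
  { intros j Hj. apply (chain_traj_eq k0 e0 p Htr n t j Htn Hj). }
  apply (near_orbit_of_close (k0 + n) t' _ (contr ^ n * e0)); [exact Ht'|exact Hclose|].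
  destruct Htr as [[He0 _] _]. pose proof (contr_pow_antimono n0 n Hn).
  assert (contr ^ n * e0 <= contr ^ n0 * e0) by (apply Rmult_le_compat_r; lra). lra.
Qed.

Lemma solution_follows_chain k0 e0 p h : tracks k0 e0 p -> solution kappa1 kappa2 h ->
  (forall j, (j < 10)%nat -> h 0 j = p j) ->
  forall t, 0 <= t -> forall j, (j < 10)%nat -> h t j = chain_traj k0 p t j.
Proof.
  intros Htr Hsol H0.
  assert (Hnn : forall n, 0 <= wall_time k0 p n)
    by (intros n; apply (wall_time_le k0 e0 p Htr 0 n); lia).
  assert (Key : forall n, (forall j, (j < 10)%nat -> h (wall_time k0 p n) j = wall_seq k0 p n j) ->
     forall t, wall_time k0 p n <= t <= wall_time k0 p (S n) ->
     forall j, (j < 10)%nat -> h t j = chain_traj k0 p t j).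
  { intros n Hq t Ht j Hj. rewrite (chain_traj_eq k0 e0 p Htr n t j Ht Hj).
    pose proof (tracks_wall_seq k0 e0 p Htr n) as Hn.
    pose proof (wall_time_step_pos k0 e0 p Htr n) as Hd. pose proof (wall_time_S k0 p n).
    destruct (Hsol (wall_time k0 p (S n)) ltac:(pose proof (Hnn n); lra)) as [N [ts [bs Hpcs]]].
    apply (solution_follows_box_flow h N ts bs (wall_time k0 p (S n)) (wall_time k0 p n)
             (box_of (k0 + n)) (wall_seq k0 p n) _ Hpcs (Hnn n) Hd Hq (tracks_enters_box _ _ _ Hn)
             (tracks_flow_in_box _ _ _ Hn)); lra || exact Hj. }
  assert (Walls : forall n j, (j < 10)%nat -> h (wall_time k0 p n) j = wall_seq k0 p n j).
  { induction n as [|n IH]; intros j Hj; [apply H0, Hj|].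
    pose proof (wall_time_lt k0 e0 p Htr n).
    rewrite (Key n IH) by (lra || exact Hj).
    rewrite (chain_traj_eq k0 e0 p Htr n) by (lra || exact Hj).
    rewrite wall_time_S.
    replace (wall_time k0 p n + ln (exit_factor (k0 + n) (wall_seq k0 p n)) - wall_time k0 p n)
      with (ln (exit_factor (k0 + n) (wall_seq k0 p n))) by ring.
    apply (wall_seq_flow_end k0 e0 p Htr). }
  intros t Ht j Hj. destruct (wall_time_cover k0 e0 p Htr 0 t Ht) as [n [_ Hn]].
  exact (Key n (Walls n) t Hn j Hj).
Qed.

Lemma wall_time_locate k0 p K t : 0 <= t <= wall_time k0 p (S K) ->
  exists r, (r <= K)%nat /\ wall_time k0 p r <= t <= wall_time k0 p (S r).
Proof.
  induction K as [|K IH]; intros Ht; [exists 0%nat; split; [lia|exact Ht]|].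
  destruct (Rle_dec t (wall_time k0 p (S K))) as [L|L].
  - destruct (IH ltac:(lra)) as [r [Hr Hr']]. exists r. split; [lia|exact Hr'].
  - exists (S K). split; [lia|lra].
Qed.

Lemma orbit_piece_of_near_orbit p d : near_orbit orbit period d p ->
  exists m s, (m < 10)%nat /\ 0 <= s <= transit m /\
    forall j, (j < 10)%nat -> Rabs (p j - flow m (orbit_pt m) s j) < d.
Proof.
  intros [t [Ht H]]. destruct (wall_time_locate 0 fixed_pt 9 t Ht) as [m [Hm Hmt]].
  exists m, (t - wall_time 0 fixed_pt m). split; [lia|]. split.
  - assert (wall_time 0 fixed_pt (S m) = wall_time 0 fixed_pt m + transit m) by reflexivity. lra.
  - intros j Hj. rewrite <- (orbit_piece m t j Hmt Hj). apply H, Hj.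
Qed.

Lemma flow_back m p s j : flow m (flow m p (- s)) s j = p j.
Proof. rewrite flow_add, Rplus_opp_l. apply flow_0. Qed.

Lemma flow_back_dist m p v s j :
  Rabs (flow m p (- s) j - v j) = Rabs (p j - flow m v s j) * exp s.
Proof.
  rewrite <- (Rabs_pos_eq (exp s)) by (left; apply exp_pos). rewrite <- Rabs_mult. f_equal.
  unfold flow. rewrite Ropp_involutive, exp_Ropp. pose proof (exp_pos s). field. lra.
Qed.

Lemma exp_le_3_of_le_transit m s : s <= transit m -> exp s <= 3.
Proof.
  intros H. apply Rle_trans with (exp (transit m)); [apply exp_le_mono, H|].
  unfold transit. rewrite exp_ln by (pose proof (orbit_pt_exit_factor m); lra).
  pose proof (exit_factor_in_ball m _ (orbit_pt_in_rad_ball m)). pose proof (exf_bounds m). lra.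
Qed.

Lemma orbit_pt_focal_dist m j : (j < 10)%nat -> Rabs (orbit_pt m j - phi m j) <= 2.
Proof.
  intros Hj. pose proof (orbit_pt_in_ball m j Hj). pose proof (apx_ball_range m j Hj).
  pose proof (focal_tab_range m j Hj). pose proof (wt_pos m j Hj). pose proof rad_pos.
  rewrite phi_eq_tab by exact Hj. apply Rabs_le_iff in H. apply Rabs_le_iff.
  assert (0 <= rad * wt m j) by nra. nra.
Qed.

Lemma wclose_of_abs_le m e v w : 0 <= e ->
  (forall j, (j < 10)%nat -> Rabs (v j - w j) <= e / 100) -> wclose m e v w.
Proof. intros He H j Hj. pose proof (H j Hj). pose proof (wt_bounds m j Hj). nra. Qed.

Lemma on_side_near_orbit_pt m x d j : 0 <= d <= 1/100 -> (j < 10)%nat -> j <> entry_var m ->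
  Rabs (x - orbit_pt m j) <= d -> on_side (box_of m) j x.
Proof.
  intros Hd Hj Hne H. apply on_side_near_apx; try assumption.
  pose proof (orbit_pt_in_ball m j Hj). pose proof (wt_bounds m j Hj). pose proof rad_pos. unfold rad in *.
  replace (x - apx m j) with ((x - orbit_pt m j) + (orbit_pt m j - apx m j)) by ring.
  eapply Rle_trans; [apply Rabs_triang|]. nra.
Qed.

Section NearOrbit.

Variables (p : state) (d : R) (m : nat) (s : R).
Hypotheses (Hd : 0 < d) (Hdr : 1500 * d <= rad / 2) (Hs : 0 <= s <= transit m)
  (Hp : forall j, (j < 10)%nat -> Rabs (p j - flow m (orbit_pt m) s j) < d).

Lemma tracks_of_near_inside :
  on_side_cl (box_of m) (entry_var m) (p (entry_var m)) ->
  on_side (box_of m) (exit_var m) (p (exit_var m)) -> tracks m (1500 * d) p.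
Proof.
  intros Hen Hex. pose proof rad_pos. split; [lra|]. split; [|split; assumption].
  exists (flow m p (- s)), s. split; [|split; [exact Hs|intros j _; symmetry; apply flow_back]].
  apply wclose_of_abs_le; [lra|]. intros j Hj. rewrite flow_back_dist.
  pose proof (Hp j Hj). pose proof (exp_le_3_of_le_transit m s ltac:(lra)). pose proof (exp_pos s).
  pose proof (Rabs_pos (p j - flow m (orbit_pt m) s j)). nra.
Qed.

(* The orbit point reaches the exit threshold only after [p]; at the exit coordinate
   the orbit moves away from the threshold at speed at least [1/2] times the
   elapsed factor [exp (- s) - exp (- transit m)], which must therefore be below [2 d]. *)
Lemma close_after_exit : ~ on_side (box_of m) (exit_var m) (p (exit_var m)) ->
  forall j, (j < 10)%nat -> Rabs (p j - orbit_pt (S m) j) < 5 * d.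
Proof.
  intros Hx. pose proof (exit_var_lt m) as Hc.
  assert (Hzs : on_side (box_of m) (exit_var m) (orbit_pt m (exit_var m))).
  { apply (on_side_of_in_ball m (rad / 2)); [pose proof rad_pos; lra|apply orbit_pt_in_ball|exact Hc|].
    apply not_eq_sym, entry_var_neq_exit_var. }
  pose proof (focal_exit_opposite m) as HF. pose proof (focal_tab_far m _ Hc) as HF2.
  rewrite <- phi_eq_tab in HF, HF2 by exact Hc.
  set (c := exit_var m) in *. set (x := flow m (orbit_pt m) s).
  set (g := exp (- s) - exp (- transit m)).
  assert (Hg : 0 <= g) by (unfold g; pose proof (exp_le_mono (- transit m) (- s) ltac:(lra)); lra).
  assert (Ex : forall j, x j - orbit_pt (S m) j = (orbit_pt m j - phi m j) * g)
    by (intros j; rewrite orbit_pt_S; apply flow_sub).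
  assert (Hxc : x c - 1/2 = (orbit_pt m c - phi m c) * g).
  { rewrite <- (Ex c). unfold c. rewrite <- entry_var_S, orbit_pt_entry_wall. ring. }
  pose proof (Hp c Hc) as Hpc. fold x in Hpc. apply Rabs_def2 in Hpc.
  assert (Hfar : 1/2 <= Rabs (orbit_pt m c - phi m c)).
  { unfold on_side in Hzs. revert Hzs HF. destruct (box_of m c); intros; solve_abs. }
  assert (Hxd : Rabs (x c - 1/2) < d).
  { unfold on_side in Hzs, Hx. revert Hzs Hx HF. destruct (box_of m c); intros Hzs Hx0 HF.
    - assert (0 <= x c - 1/2) by (rewrite Hxc; apply Rmult_le_pos; lra).
      rewrite Rabs_pos_eq by lra. lra.
    - assert (x c - 1/2 <= 0) by (rewrite Hxc; assert (orbit_pt m c - phi m c <= 0) by lra; nra).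
      rewrite Rabs_left1 by lra. lra. }
  assert (Hgd : g < 2 * d).
  { rewrite Hxc, Rabs_mult, (Rabs_pos_eq g) in Hxd by lra. nra. }
  intros j Hj. replace (p j - orbit_pt (S m) j) with ((p j - x j) + (x j - orbit_pt (S m) j)) by ring.
  eapply Rle_lt_trans; [apply Rabs_triang|]. rewrite Ex, Rabs_mult, (Rabs_pos_eq g) by lra.
  pose proof (Hp j Hj). pose proof (orbit_pt_focal_dist m j Hj).
  pose proof (Rabs_pos (orbit_pt m j - phi m j)). fold x in H. nra.
Qed.

Lemma tracks_of_near_after_exit : ~ on_side (box_of m) (exit_var m) (p (exit_var m)) ->
  tracks (S m) (1500 * d) p.
Proof.
  intros Hx. pose proof (close_after_exit Hx) as Hcl. pose proof rad_pos. pose proof (exit_var_lt m) as Hc.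
  split; [lra|]. split.
  { exists p, 0. split; [apply wclose_of_abs_le; [lra|intros j Hj; pose proof (Hcl j Hj); lra]|].
    split; [split; [lra|left; apply transit_pos]|]. intros j _. rewrite flow_0. reflexivity. }
  split.
  - rewrite entry_var_S. unfold on_side_cl, on_side in *. rewrite (box_of_S m _ Hc), Nat.eqb_refl.
    destruct (box_of m (exit_var m)); simpl; lra.
  - apply (on_side_near_orbit_pt (S m) _ (5 * d)); [unfold rad in *; lra|apply exit_var_lt| |].
    + apply not_eq_sym, entry_var_neq_exit_var.
    + pose proof (Hcl (exit_var (S m)) (exit_var_lt _)). lra.
Qed.

(* Symmetrically, [p] has not yet reached the entry threshold, which the orbit left at
   speed at least [1/2] times [1 - exp (- s)]. *)
Lemma close_before_entry : ~ on_side_cl (box_of m) (entry_var m) (p (entry_var m)) ->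
  forall j, (j < 10)%nat -> Rabs (p j - orbit_pt m j) < 5 * d.
Proof.
  intros Hw. pose proof (entry_var_lt m) as Hc.
  pose proof (focal_entry_side m) as HF. pose proof (focal_tab_far m _ Hc) as HF2.
  rewrite <- phi_eq_tab in HF, HF2 by exact Hc. pose proof (orbit_pt_entry_wall m) as Hwall.
  set (c := entry_var m) in *. set (x := flow m (orbit_pt m) s). set (g := 1 - exp (- s)).
  assert (Hg : 0 <= g) by (unfold g; pose proof (one_minus_exp_neg_bounds s ltac:(lra)); lra).
  assert (Ex : forall j, x j - orbit_pt m j = - ((orbit_pt m j - phi m j) * g))
    by (intros j; unfold x, g, flow; ring).
  assert (Hxc : x c - 1/2 = (phi m c - 1/2) * g) by (pose proof (Ex c) as E; rewrite Hwall in E; lra).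
  pose proof (Hp c Hc) as Hpc. fold x in Hpc. apply Rabs_def2 in Hpc.
  assert (Hgd : g < 2 * d).
  { unfold on_side, on_side_cl in HF, Hw. revert HF Hw. destruct (box_of m c); intros HF Hw0;
      apply Rnot_le_lt in Hw0; nra. }
  intros j Hj. replace (p j - orbit_pt m j) with ((p j - x j) + (x j - orbit_pt m j)) by ring.
  eapply Rle_lt_trans; [apply Rabs_triang|]. rewrite Ex, Rabs_Ropp, Rabs_mult, (Rabs_pos_eq g) by lra.
  pose proof (Hp j Hj). pose proof (orbit_pt_focal_dist m j Hj).
  pose proof (Rabs_pos (orbit_pt m j - phi m j)). fold x in H. nra.
Qed.

Lemma tracks_of_near_before_entry : ~ on_side_cl (box_of m) (entry_var m) (p (entry_var m)) ->
  tracks (m + 9) (1500 * d) p.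
Proof.
  intros Hw. pose proof (close_before_entry Hw) as Hcl. pose proof rad_pos.
  set (k := (m + 9)%nat).
  assert (HS : S k = (m + 10)%nat) by (unfold k; lia).
  assert (Hbx : box_of (S k) = box_of m) by (rewrite HS; apply box_of_add10).
  assert (Hexk : exit_var k = entry_var m) by (rewrite <- entry_var_S, HS; apply entry_var_add10).
  pose proof (entry_var_lt k) as He. pose proof (exit_var_lt k) as Hc. pose proof (entry_var_neq_exit_var k).
  split; [lra|]. split.
  { exists (flow k p (- transit k)), (transit k).
    split; [|split; [pose proof (transit_pos k); lra|intros j _; symmetry; apply flow_back]].
    apply wclose_of_abs_le; [lra|]. intros j Hj. rewrite flow_back_dist, <- orbit_pt_S, HS,
      orbit_pt_add10 by exact Hj.
    pose proof (Hcl j Hj). pose proof (exp_le_3_of_le_transit k (transit k) ltac:(lra)).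
    pose proof (exp_pos (transit k)). pose proof (Rabs_pos (p j - orbit_pt m j)). nra. }
  split.
  - apply on_side_cl_of_on_side, on_side_of_S; [exact He|auto|]. rewrite Hbx.
    apply (on_side_near_orbit_pt m _ (5 * d)); [unfold rad in *; lra|exact He| |].
    + rewrite <- Hexk. exact H0.
    + pose proof (Hcl (entry_var k) He). lra.
  - rewrite Hexk. unfold on_side. unfold on_side_cl in Hw.
    pose proof (box_of_S k (exit_var k) Hc) as B. rewrite Nat.eqb_refl, Hbx, Hexk in B.
    revert Hw. destruct (box_of k (entry_var m)); simpl in B; rewrite B; intros Hw0; lra.
Qed.

End NearOrbit.

Lemma tracks_of_near_orbit p d : 0 < d -> 1500 * d <= rad / 2 -> near_orbit orbit period d p ->
  exists k0, tracks k0 (1500 * d) p.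
Proof.
  intros Hd Hdr Hn. destruct (orbit_piece_of_near_orbit p d Hn) as [m [s [_ [Hs Hp]]]].
  destruct (classic (on_side_cl (box_of m) (entry_var m) (p (entry_var m)))) as [Hw|Hw].
  - destruct (classic (on_side (box_of m) (exit_var m) (p (exit_var m)))) as [Hx|Hx].
    + exists m. apply tracks_of_near_inside with s; assumption.
    + exists (S m). apply tracks_of_near_after_exit with s; assumption.
  - exists (m + 9)%nat. apply tracks_of_near_before_entry with s; assumption.
Qed.

Lemma orbit_0 : orbit 0 = fixed_pt.
Proof. exact (chain_traj_0 0 0 fixed_pt tracks_orbit_start). Qed.

Lemma solution_near_orbit k0 e0 p h : tracks k0 e0 p -> solution kappa1 kappa2 h ->
  (forall j, (j < 10)%nat -> h 0 j = p j) ->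
  forall n0 t eps, wall_time k0 p n0 <= t -> contr ^ n0 * e0 < eps -> near_orbit orbit period eps (h t).
Proof.
  intros Htr Hsol H0 n0 t eps Ht He.
  assert (0 <= t) by (pose proof (wall_time_le k0 e0 p Htr 0 n0 ltac:(lia)); simpl wall_time in *; lra).
  apply (near_orbit_ext _ _ _ _ (chain_traj k0 p t)).
  - intros j Hj. apply (solution_follows_chain k0 e0 p h); assumption.
  - apply (chain_traj_near_orbit k0 e0 p Htr n0); assumption.
Qed.

Lemma near_orbit_has_solution : exists d, 0 < d /\ forall p, near_orbit orbit period d p ->
  exists h, solution kappa1 kappa2 h /\ h 0 = p.
Proof.
  pose proof rad_pos. exists (rad / 3000). split; [lra|]. intros p Hp.
  destruct (tracks_of_near_orbit p (rad / 3000) ltac:(lra) ltac:(lra) Hp) as [k0 Htr].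
  exists (chain_traj k0 p). split; [apply (chain_traj_solution _ _ _ Htr)|apply (chain_traj_0 _ _ _ Htr)].
Qed.

Lemma orbit_lyapunov_stable : forall eps, 0 < eps -> exists d, 0 < d /\
  forall h, solution kappa1 kappa2 h -> near_orbit orbit period d (h 0) ->
    forall t, 0 <= t -> near_orbit orbit period eps (h t).
Proof.
  intros eps Heps. pose proof rad_pos. set (d := Rmin (rad / 3000) (eps / 3000)).
  assert (Hd1 : d <= rad / 3000) by apply Rmin_l. assert (Hd2 : d <= eps / 3000) by apply Rmin_r.
  assert (Hd0 : 0 < d) by (apply Rmin_glb_lt; lra).
  exists d. split; [exact Hd0|]. intros h Hs Hn t Ht.
  destruct (tracks_of_near_orbit (h 0) d Hd0 ltac:(lra) Hn) as [k0 Htr].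
  apply (solution_near_orbit k0 (1500 * d) (h 0) h Htr Hs (fun j _ => eq_refl) 0 t eps); simpl; lra.
Qed.

Lemma orbit_attractive : exists d, 0 < d /\
  forall h, solution kappa1 kappa2 h -> near_orbit orbit period d (h 0) ->
    forall eps, 0 < eps -> exists t0, 0 <= t0 /\
      forall t, t0 <= t -> near_orbit orbit period eps (h t).
Proof.
  pose proof rad_pos. exists (rad / 3000). split; [lra|]. intros h Hs Hn eps Heps.
  set (e0 := 1500 * (rad / 3000)).
  destruct (tracks_of_near_orbit (h 0) (rad / 3000) ltac:(lra) ltac:(lra) Hn) as [k0 Htr].
  destruct (pow_lt_1_zero contr ltac:(unfold contr; rewrite Rabs_pos_eq; lra) (eps / e0)
    ltac:(unfold e0; apply Rdiv_lt_0_compat; lra)) as [N HN].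
  exists (wall_time k0 (h 0) N). split.
  { pose proof (wall_time_le k0 e0 (h 0) Htr 0 N ltac:(lia)). simpl wall_time in *. lra. }
  intros t Ht. apply (solution_near_orbit k0 e0 (h 0) h Htr Hs (fun j _ => eq_refl) N t eps Ht).
  specialize (HN N (le_n N)). rewrite Rabs_pos_eq in HN by (apply pow_le; unfold contr; lra).
  apply (Rmult_lt_compat_r e0) in HN; [|unfold e0; lra].
  unfold Rdiv in HN. rewrite Rmult_assoc, Rinv_l, Rmult_1_r in HN by (unfold e0; lra). exact HN.
Qed.

Lemma orbit_asymptotically_stable : asymptotically_stable_orbit kappa1 kappa2 orbit period.
Proof.
  split; [exact near_orbit_has_solution|]. split; [exact orbit_lyapunov_stable|exact orbit_attractive].
Qed.

Fixpoint exit_factor_prod (n : nat) : R :=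
  match n with O => 1 | S n' => exit_factor_prod n' * exit_factor n' (orbit_pt n') end.
Fixpoint exf_lo_prod (n : nat) : R := match n with O => 1 | S n' => exf_lo_prod n' * exf_lo n' end.
Fixpoint exf_hi_prod (n : nat) : R := match n with O => 1 | S n' => exf_hi_prod n' * exf_hi n' end.

Lemma exp_orbit_wall_time n : exp (wall_time 0 fixed_pt n) = exit_factor_prod n.
Proof.
  induction n as [|n IH]; [apply exp_0|]. simpl. rewrite exp_plus, IH, exp_ln; [reflexivity|].
  pose proof (orbit_pt_exit_factor n). unfold orbit_pt in H. lra.
Qed.

Lemma exit_factor_prod_bounds n :
  0 < exf_lo_prod n /\ exf_lo_prod n <= exit_factor_prod n <= exf_hi_prod n.
Proof.
  induction n as [|n [IH1 [IH2 IH3]]]; simpl; [lra|].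
  pose proof (exit_factor_in_ball n _ (orbit_pt_in_rad_ball n)). pose proof (exf_bounds n).
  split; [apply Rmult_lt_0_compat; lra|]. split; apply Rmult_le_compat; lra.
Qed.

(* Enclosures of [exp] at [7.29637] and [7.29639]: [28] successive squarings of the
   bounds [1 + z <= exp z <= 1 / (1 - z)] with [z = x / 2^28]. *)
Definition sq_upper : list R := [250000006795274278450144034084966130467222353/250000000000000000000000000000000000000000000; 1000000054362194966413192582537739229787072859/1000000000000000000000000000000000000000000000; 500000054362196444037313365697665538294063977/500000000000000000000000000000000000000000000; 1000000217448797597142862343203134825528265897/1000000000000000000000000000000000000000000000; 250000108724410619566325282402433390725042027/250000000000000000000000000000000000000000000; 12500010872443426156125442653588990473970179/12500000000000000000000000000000000000000000; 200000347918340945829364520815726088872496497/200000000000000000000000000000000000000000000; 62500217449152227349550479206312035846127999/62500000000000000000000000000000000000000000; 1000006958384976013439539952322370946877332819/1000000000000000000000000000000000000000000000; 1000013916818371148353489460206519257860510669/1000000000000000000000000000000000000000000000; 8000222670643361042260089849512832307201439/8000000000000000000000000000000000000000000; 1000055668435562376421592361426826376206605591/1000000000000000000000000000000000000000000000; 1000111339970099470805640581014829487025411133/1000000000000000000000000000000000000000000000; 62513918271049242710145887732521381012896697/62500000000000000000000000000000000000000000; 8003563474123621046181903485418841609656693/8000000000000000000000000000000000000000000; 500445533471295050435106109019079475868667831/500000000000000000000000000000000000000000000; 1001782927885476378610544567375391527764538291/1000000000000000000000000000000000000000000000; 501784517301398783245865738307890666768481927/500000000000000000000000000000000000000000000; 251787701803397774841670090029434988701700723/250000000000000000000000000000000000000000000;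 1014352748470988145235959784935931944332612303/1000000000000000000000000000000000000000000000; 128613937291330967876608458185914086401045089/125000000000000000000000000000000000000000000; 1058658871397018533256705335904130980313495151/1000000000000000000000000000000000000000000000; 70047412874225564095303935245324486032710891/62500000000000000000000000000000000000000000; 62804992644764432672034060191404797251231807/50000000000000000000000000000000000000000000; 49305838763861431092805614837341702247626251/31250000000000000000000000000000000000000000; 497882262775378029630332750329805447355925219/200000000000000000000000000000000000000000000; 6197168689658264479902931898179668420651165147/1000000000000000000000000000000000000000000000; 38404899768080730769303950762898631898593690257/1000000000000000000000000000000000000000000000; 737468163098163684015315018904085295069191350733/500000000000000000000000000000000000000000000].
Definition sq_lower : list R := [26843546329639/26843545600000; 500000027181171250202550371960485975364463229/500000000000000000000000000000000000000000000; 200000021744937591214896723838528935539059953/200000000000000000000000000000000000000000000; 200000043489877546641347676830632760100759561/200000000000000000000000000000000000000000000; 500000217449411375324851157393738500040386299/500000000000000000000000000000000000000000000; 1000000869797834638285434530602060178630985849/1000000000000000000000000000000000000000000000; 1000001739596425824844010511337384698515224239/1000000000000000000000000000000000000000000000; 500001739597938922706381797342093067272452839/500000000000000000000000000000000000000000000; 40000278336154419791277748068040423746787719/40000000000000000000000000000000000000000000; 1000013916856140373849636088176090434512560967/1000000000000000000000000000000000000000000000; 500013916952979816265566749579590815293327339/500000000000000000000000000000000000000000000; 200011133717329117206386866434334779868461877/200000000000000000000000000000000000000000000; 1000111340272282711180988159394906130191636321/1000000000000000000000000000000000000000000000; 4000890771764886617400959904164862930043963/4000000000000000000000000000000000000000000;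 1000445435474589378651679281981723221065325103/1000000000000000000000000000000000000000000000; 50044553468097038998417653190718625725183591/50000000000000000000000000000000000000000000; 1001782932728489349485438496625284813677325239/1000000000000000000000000000000000000000000000; 200713808861218603489457453844723440393864911/200000000000000000000000000000000000000000000; 1007150826689444889882991745666217583809382297/1000000000000000000000000000000000000000000000; 1014352787701232257129602616183596533595884863/1000000000000000000000000000000000000000000000; 102891157791726115819915274629572201420890297/100000000000000000000000000000000000000000000; 1058659035172188179448441496850875613398447711/1000000000000000000000000000000000000000000000; 1120758952751708368816236583761975722233540237/1000000000000000000000000000000000000000000000; 314025157543276517963323765037657855257318403/250000000000000000000000000000000000000000000; 1577788793121274191853464097374670197966213071/1000000000000000000000000000000000000000000000; 2489417475699086970587762531740941538486082421/1000000000000000000000000000000000000000000000; 619719936831601426774069672777785923285534933/100000000000000000000000000000000000000000000; 38405280010656406264743122115944923321032940497/1000000000000000000000000000000000000000000000; 737482766348462266447993230176685474742348499407/500000000000000000000000000000000000000000000].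

Lemma sq_upper_step i : (i < 28)%nat -> nth i sq_upper 0 * nth i sq_upper 0 <= nth (S i) sq_upper 0.
Proof. intros Hi. do 28 (destruct i as [|i]; [cbv [nth sq_upper]; lra|]). lia. Qed.

Lemma sq_lower_step i : (i < 28)%nat ->
  0 <= nth i sq_lower 0 /\ nth (S i) sq_lower 0 <= nth i sq_lower 0 * nth i sq_lower 0.
Proof. intros Hi. do 28 (destruct i as [|i]; [cbv [nth sq_lower]; lra|]). lia. Qed.

Lemma exp_upper_bound : exp (729637/100000) <= nth 28 sq_upper 0.
Proof.
  set (z := 729637/100000 / 268435456).
  replace (729637/100000) with (z * 2 ^ 28) by (unfold z; simpl; lra).
  apply (exp_mul_pow2_le (fun i => nth i sq_upper 0)); [|exact sq_upper_step].
  pose proof (exp_ineq1_le (- z)). pose proof (exp_pos z).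
  assert (E : exp z * exp (- z) = 1) by (rewrite <- exp_plus, Rplus_opp_r, exp_0; reflexivity).
  assert (Hz : 0 < 1 - z) by (unfold z; lra).
  assert (exp z * (1 - z) <= 1) by (rewrite <- E; apply Rmult_le_compat_l; lra).
  assert (exp z <= 1 / (1 - z)).
  { apply (Rmult_le_reg_r (1 - z)); [lra|]. unfold Rdiv. rewrite Rmult_assoc, Rinv_l, Rmult_1_r by lra. lra. }
  eapply Rle_trans; [eassumption|]. unfold z. cbv [nth sq_upper]. lra.
Qed.

Lemma exp_lower_bound : nth 28 sq_lower 0 <= exp (729639/100000).
Proof.
  set (z := 729639/100000 / 268435456).
  replace (729639/100000) with (z * 2 ^ 28) by (unfold z; simpl; lra).
  apply (exp_mul_pow2_ge (fun i => nth i sq_lower 0)); [|exact sq_lower_step].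
  eapply Rle_trans; [|apply exp_ineq1_le]. unfold z. cbv [nth sq_lower]. lra.
Qed.

Lemma exf_prod_values : nth 28 sq_upper 0 < exf_lo_prod 10 /\ 147496/100 - 1/100 < exf_lo_prod 10 /\
  exf_hi_prod 10 < nth 28 sq_lower 0 /\ exf_hi_prod 10 < 147496/100 + 1/100.
Proof.
  simpl exf_lo_prod. simpl exf_hi_prod.
  cbv [exf_lo exf_hi exf_lo_table exf_hi_table nth sq_upper sq_lower Nat.modulo Nat.divmod fst snd Nat.sub].
  lra.
Qed.

Lemma period_bounds : Rabs (period - 729638/100000) < 1/100000 /\ Rabs (exp period - 147496/100) < 1/100.
Proof.
  pose proof (exp_orbit_wall_time 10) as E. fold period in E.
  pose proof (exit_factor_prod_bounds 10) as [_ [B1 B2]].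
  pose proof exf_prod_values. pose proof exp_upper_bound. pose proof exp_lower_bound.
  split; apply Rabs_def1.
  - assert (period < 729639/100000) by (apply exp_lt_inv; lra). lra.
  - assert (729637/100000 < period) by (apply exp_lt_inv; lra). lra.
  - lra.
  - lra.
Qed.

Lemma fixed_pt_approx_vstar j : (j < 10)%nat ->
  Rabs ((fixed_pt j - 1/2) - List.nth j vstar 0) < 1/100000.
Proof.
  intros Hj. pose proof (fixed_pt_in_ball j Hj) as H. apply Rabs_le_iff in H.
  assert (N : Rabs (apx 0 j - 1/2 - List.nth j vstar 0) + rad / 2 * wt 0 j < 1/100000).
  { unfold rad. case_lt10 Hj; cbv [apx wt apx_table weight_table vstar nth Nat.modulo Nat.divmod fst snd Nat.sub];
    solve_abs. }
  replace (fixed_pt j - 1/2 - List.nth j vstar 0)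
    with ((fixed_pt j - apx 0 j) + (apx 0 j - 1/2 - List.nth j vstar 0)) by ring.
  eapply Rle_lt_trans; [apply Rabs_triang|]. apply Rabs_le_iff in H. lra.
Qed.

Theorem mainTheorem2 :
  exists (g : R -> state) (T : R) (ts : nat -> R),
    0 < T /\
    traj_pieces kappa1 kappa2 g 10 ts cycle_box T /\
    g T = g 0 /\
    g 0 2%nat = 1/2 /\
    (forall j, (j < 10)%nat -> Rabs ((g 0 j - 1/2) - List.nth j vstar 0) < 1/100000) /\
    Rabs (T - 729638/100000) < 1/100000 /\
    Rabs (exp T - 147496/100) < 1/100 /\
    asymptotically_stable_orbit kappa1 kappa2 g T.
Proof.
  destruct orbit_traj_pieces as [ts Hts].
  exists orbit, period, ts.
  split; [exact period_pos|]. split; [exact Hts|]. split; [exact orbit_periodic|].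
  rewrite orbit_0. split; [exact (orbit_pt_entry_wall 0)|].
  split; [exact fixed_pt_approx_vstar|].
  destruct period_bounds as [HT HexpT].
  split; [exact HT|]. split; [exact HexpT|]. exact orbit_asymptotically_stable.
Qed.
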